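(* The family $\mathcal{L}_0$ contains four chains $\mathcal{K}_0,\mathcal{K}_1,\mathcal{K}_2,\mathcal{K}_3$ (with respect to $\subset$), each of size $\mathfrak{c}$, such that for each $i\in\{0,1,2,3\}$ all spaces $(\mathbb{R},\tau)$ with $\tau\in\mathcal{K}_i$ are pairwise homeomorphic, and: (i) for $\tau\in\mathcal{K}_0$ the space $(\mathbb{R},\tau)$ is second countable but not regular; (ii) for $\tau\in\mathcal{K}_1$ the space $(\mathbb{R},\tau)$ is neither regular nor first countable; (iii) for $\tau\in\mathcal{K}_2$ the space $(\mathbb{R},\tau)$ is completely normal but not first countable; (iv) for $\tau\in\mathcal{K}_3$ the space $(\mathbb{R},\tau)$ is completely metrizable; (v) $\mathcal{K}_0\cup\mathcal{K}_1\cup\mathcal{K}_2$ is a chain and for every $i\in\{0,1,2\}$ the chain $\mathcal{K}_i$ is dense in $\mathcal{K}_0\cup\mathcal{K}_1\cup\mathcal{K}_2$; (vi) every topology in $\mathcal{K}_0\cup\mathcal{K}_1\cup\mathcal{K}_2$ is a subset of every topology in $\mathcal{K}_3$.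
   Context: $\mathfrak{c}=|\mathbb{R}|$. $\eta$ denotes the Euclidean topology on $\mathbb{R}$. $\mathcal{L}$ denotes the family of all Hausdorff topologies $\tau$ on $\mathbb{R}$ with $\tau\subset\eta$. For $\tau\in\mathcal{L}$ and $a\in\mathbb{R}$ let $\mathcal{N}_\tau(a)$ be the neighborhood filter of $a$ in $(\mathbb{R},\tau)$; let $C(\tau)$ be the set of all $a\in\mathbb{R}$ with $\mathcal{N}_\tau(a)\neq\mathcal{N}_\eta(a)$. $\mathcal{L}_0:=\{\tau\in\mathcal{L}\mid C(\tau)\subset\{0\}\}$. A chain is a family of topologies totally ordered by inclusion. If $\mathcal{K}'\subset\mathcal{K}$ are chains, $\mathcal{K}'$ is dense in $\mathcal{K}$ if for every $X,Y\in\mathcal{K}$ with $X\subsetneq Y$ there is $Z\in\mathcal{K}'\setminus\{X,Y\}$ with $X\subset Z\subset Y$. *)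

From Stdlib Require Import Reals.
Open Scope R_scope.

Definition subset (A B : R -> Prop) : Prop := forall x, A x -> B x.
Definition topo := (R -> Prop) -> Prop.
Definition tsub (t1 t2 : topo) : Prop := forall U, t1 U -> t2 U.

Definition is_topology (tau : topo) : Prop :=
  tau (fun _ => False) /\ tau (fun _ => True) /\
  (forall U V, tau U -> tau V -> tau (fun x => U x /\ V x)) /\
  (forall F : (R -> Prop) -> Prop, (forall U, F U -> tau U) ->
     tau (fun x => exists U, F U /\ U x)).

Definition hausdorff (tau : topo) : Prop :=
  forall x y, x <> y -> exists U V, tau U /\ tau V /\ U x /\ V y /\
     (forall z, U z -> V z -> False).

Definition eta : topo := fun U =>
  forall x, U x -> exists e, 0 < e /\ (forall y, Rabs (y - x) < e -> U y).

Definition in_L (tau : topo) : Prop :=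
  is_topology tau /\ hausdorff tau /\ tsub tau eta.

Definition nbhd_filter (tau : topo) (a : R) : (R -> Prop) -> Prop :=
  fun A => exists U, tau U /\ U a /\ subset U A.

Definition C_set (tau : topo) (a : R) : Prop :=
  nbhd_filter tau a <> nbhd_filter eta a.

Definition in_L0 (tau : topo) : Prop :=
  in_L tau /\ (forall a, C_set tau a -> a = 0).

Definition chain (K : topo -> Prop) : Prop :=
  forall X Y, K X -> K Y -> tsub X Y \/ tsub Y X.

Definition dense_in (K' K : topo -> Prop) : Prop :=
  forall X Y, K X -> K Y -> tsub X Y -> X <> Y ->
    exists Z, K' Z /\ Z <> X /\ Z <> Y /\ tsub X Z /\ tsub Z Y.

Definition card_c (K : topo -> Prop) : Prop :=
  exists f : R -> topo, (forall r, K (f r)) /\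
    (forall r s, f r = f s -> r = s) /\
    (forall t, K t -> exists r, f r = t).

Definition homeomorphic (t1 t2 : topo) : Prop :=
  exists f : R -> R, (forall x y, f x = f y -> x = y) /\
    (forall y, exists x, f x = y) /\
    (forall U, t2 U <-> t1 (fun x => U (f x))).

Definition second_countable (tau : topo) : Prop :=
  exists b : nat -> R -> Prop, (forall n, tau (b n)) /\
    (forall U x, tau U -> U x -> exists n, b n x /\ subset (b n) U).

Definition first_countable (tau : topo) : Prop :=
  forall x, exists b : nat -> R -> Prop, (forall n, tau (b n) /\ b n x) /\
    (forall U, tau U -> U x -> exists n, subset (b n) U).

Definition closed_in (tau : topo) (F : R -> Prop) : Prop :=
  tau (fun x => ~ F x).

Definition regular (tau : topo) : Prop :=
  forall F x, closed_in tau F -> ~ F x ->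
    exists U V, tau U /\ tau V /\ U x /\ subset F V /\
      (forall z, U z -> V z -> False).

Definition closure (tau : topo) (A : R -> Prop) : R -> Prop :=
  fun x => forall U, tau U -> U x -> exists y, U y /\ A y.

Definition completely_normal (tau : topo) : Prop :=
  forall A B : R -> Prop,
    (forall x, closure tau A x -> B x -> False) ->
    (forall x, A x -> closure tau B x -> False) ->
    exists U V, tau U /\ tau V /\ subset A U /\ subset B V /\
      (forall z, U z -> V z -> False).

Definition is_metric (d : R -> R -> R) : Prop :=
  (forall x y, 0 <= d x y) /\ (forall x y, d x y = 0 <-> x = y) /\
  (forall x y, d x y = d y x) /\ (forall x y z, d x z <= d x y + d y z).

Definition metric_topology (d : R -> R -> R) : topo := fun U =>
  forall x, U x -> exists e, 0 < e /\ (forall y, d x y < e -> U y).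

Definition metric_complete (d : R -> R -> R) : Prop :=
  forall u : nat -> R,
    (forall e, 0 < e -> exists N, forall m n, (N <= m)%nat -> (N <= n)%nat ->
        d (u m) (u n) < e) ->
    exists l, forall e, 0 < e -> exists N, forall n, (N <= n)%nat -> d (u n) l < e.

Definition completely_metrizable (tau : topo) : Prop :=
  exists d, is_metric d /\ metric_complete d /\
    (forall U, tau U <-> metric_topology d U).

Definition union3 (K0 K1 K2 : topo -> Prop) : topo -> Prop :=
  fun t => K0 t \/ K1 t \/ K2 t.

From Stdlib Require Import Reals Lra Lia ZArith.
From Stdlib Require Import Classical ClassicalEpsilon FunctionalExtensionality PropExtensionality.
From Stdlib Require Import Arith.Cantor.
Open Scope R_scope.

(* Every topology below agrees with the Euclidean one away from 0, while a neighbourhood of 0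
   must contain, besides some (-e, e), a spike (n - e, n + c n + w) for every large integer n,
   where the anchors c n lie in [1/4, 3/4].  The shape of the spikes decides the properties.
   If spikes stop at the anchor ([Stop]), the anchors form a closed set that cannot be
   separated from 0, while countably many spike neighbourhoods suffice at 0.  If they overshoot
   the anchor by an arbitrary width w n ([Overhang]), a diagonal argument defeats first
   countability, yet separated sets can still be separated by unions of small balls; removing
   the anchor from such spikes ([Punctured]) destroys regularity again.  An overshoot by the same
   e at every n ([Uniform]) is described by a complete "hub" metric in which the n-th tooth lies
   at distance about 1/n from 0.

   Eventually larger anchors give coarser topologies, and the anchors a + d / (8 (|d| + |n| + 1))
   order the topologies lexicographically in (a, d).  Coding a real x by a = 3/8 + frac x / 4 and
   by a dyadic rational d attached to the integer part of x, using disjoint dense classes of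
   dyadics for the three shapes, yields three chains of size c that are dense in their union.
   Topologies of the same shape are homeomorphic through blockwise piecewise-linear maps moving
   one anchor sequence onto the other. *)

Lemma Rabs_lt_between x a : Rabs x < a <-> - a < x < a.
Proof. split; [intro H; apply Rabs_def2 in H; lra | intros []; apply Rabs_def1; lra]. Qed.

Lemma Rabs_le_between x a : Rabs x <= a <-> - a <= x <= a.
Proof.
  split; [|apply Rabs_le].
  intro H. pose proof (Rle_abs x). pose proof (Rle_abs (- x)). rewrite Rabs_Ropp in *. lra.
Qed.

Lemma Rabs_sub_triang x y z : Rabs (x - z) <= Rabs (x - y) + Rabs (y - z).
Proof. replace (x - z) with ((x - y) + (y - z)) by ring. apply Rabs_triang. Qed.

Lemma Rdiv_lt_of_lt_mul a b c : 0 < b -> a < c * b -> a / b < c.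
Proof. intros Hb H. assert (E : a / b * b = a) by (field; lra). nra. Qed.

Lemma Rlt_div_of_mul_lt a b c : 0 < b -> c * b < a -> c < a / b.
Proof. intros Hb H. assert (E : a / b * b = a) by (field; lra). nra. Qed.

Lemma Int_part_bounds x : IZR (Int_part x) <= x < IZR (Int_part x) + 1.
Proof. destruct (base_Int_part x); lra. Qed.

Lemma Int_part_eq x k : IZR k <= x < IZR k + 1 -> Int_part x = k.
Proof. intro H. symmetry. apply Int_part_spec. lra. Qed.

Lemma Int_part_IZR n : Int_part (IZR n) = n.
Proof. apply Int_part_eq; lra. Qed.

Lemma Z_le_of_IZR_lt_succ m n : IZR m < IZR n + 1 -> (m <= n)%Z.
Proof. intro H. rewrite <- plus_IZR in H. apply lt_IZR in H. lia. Qed.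

Lemma Z_eq_of_IZR_close m n : IZR m < IZR n + 1 -> IZR n < IZR m + 1 -> m = n.
Proof. intros H1 H2. apply Z_le_of_IZR_lt_succ in H1, H2. lia. Qed.

Lemma Int_part_le x y : x <= y -> (Int_part x <= Int_part y)%Z.
Proof.
  intro. pose proof (Int_part_bounds x). pose proof (Int_part_bounds y).
  apply Z_le_of_IZR_lt_succ. lra.
Qed.

Lemma Int_part_ge1 x : 1 <= x -> (1 <= Int_part x)%Z.
Proof. intro. rewrite <- (Int_part_IZR 1). now apply Int_part_le. Qed.

Lemma eventually_Z_gt (X : R) : exists N0, forall n, (N0 <= n)%Z -> X < IZR n.
Proof.
  exists (up X). intros n Hn. destruct (archimed X) as [H _].
  apply IZR_le in Hn. lra.
Qed.

Lemma le_ind_blocks (P : R -> R -> Prop) :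
  (forall x y z, x <= y <= z -> P x y -> P y z -> P x z) ->
  (forall x y, x <= y <= 1 -> P x y) ->
  (forall (k : Z) x y, (1 <= k)%Z -> IZR k <= x <= y -> y <= IZR k + 1 -> P x y) ->
  forall x y, x <= y -> P x y.
Proof.
  intros Htrans Hlow Hblock.
  assert (Hup : forall (m : nat) x y, 1 <= x <= y ->
            (Int_part y - Int_part x <= Z.of_nat m)%Z -> P x y).
  { induction m as [|m IH]; intros x y Hxy Hm;
      pose proof (Int_part_le x y (proj2 Hxy)); pose proof (Int_part_bounds x);
      pose proof (Int_part_bounds y); pose proof (Int_part_ge1 x (proj1 Hxy)).
    - assert (E : Int_part y = Int_part x) by lia.
      apply (Hblock (Int_part x)); auto; [split; lra|rewrite <- E; lra].
    - destruct (Z.eq_dec (Int_part y) (Int_part x)) as [E|E]; [apply IH; auto; lia|].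
      assert (Hk : IZR (Int_part x) + 1 <= IZR (Int_part y)).
      { rewrite <- plus_IZR. apply IZR_le. lia. }
      apply (Htrans _ (IZR (Int_part x) + 1));
        [split; lra|apply (Hblock (Int_part x)); auto; try split; lra|].
      apply IH; [lra|]. rewrite <- plus_IZR, Int_part_IZR. lia. }
  intros x y Hxy. destruct (Rle_dec y 1); [apply Hlow; split; lra|].
  assert (Hgap : forall u, 1 <= u <= y -> P u y).
  { intros u Hu. apply (Hup (Z.to_nat (Int_part y - Int_part u))); [lra|].
    pose proof (Int_part_le u y (proj2 Hu)). lia. }
  destruct (Rle_dec 1 x); [apply Hgap; split; lra|].
  apply (Htrans _ 1); [split; lra|apply Hlow; split; lra|apply Hgap; split; lra].
Qed.

(** * Topologies that differ from the Euclidean one only at 0 *)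

Lemma eta_local U : (forall x, U x -> exists V, eta V /\ V x /\ subset V U) -> eta U.
Proof.
  intros H x Ux. destruct (H x Ux) as (V & HV & Vx & VU).
  destruct (HV x Vx) as (e & He & Hb). exists e. split; auto.
Qed.

Lemma eta_ball a r : eta (fun x => Rabs (x - a) < r).
Proof.
  intros x Hx. exists (r - Rabs (x - a)). split; [lra|].
  intros y Hy. pose proof (Rabs_sub_triang y x a). lra.
Qed.

Lemma eta_interval a b : eta (fun x => a < x < b).
Proof.
  intros x Hx. exists (Rmin (x - a) (b - x)). split; [apply Rmin_pos; lra|].
  intros y Hy%Rabs_lt_between. pose proof (Rmin_l (x - a) (b - x)).
  pose proof (Rmin_r (x - a) (b - x)). lra.
Qed.

Lemma eta_inter U V : eta U -> eta V -> eta (fun x => U x /\ V x).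
Proof.
  intros HU HV x [Ux Vx]. destruct (HU x Ux) as (e1 & He1 & H1).
  destruct (HV x Vx) as (e2 & He2 & H2). exists (Rmin e1 e2). split; [now apply Rmin_pos|].
  intros y Hy. pose proof (Rmin_l e1 e2). pose proof (Rmin_r e1 e2).
  split; [apply H1 | apply H2]; lra.
Qed.

Lemma eta_remove_point U p : eta U -> eta (fun x => U x /\ x <> p).
Proof.
  intro HU. apply eta_inter; auto. intros x Hx.
  exists (Rabs (x - p)). split; [apply Rabs_pos_lt; lra|].
  intros y Hy ->. rewrite Rabs_minus_sym in Hy. lra.
Qed.

Definition topology_at0 (nb : (R -> Prop) -> Prop) : topo :=
  fun U => eta U /\ (U 0 -> nb U).

Definition is_filter (nb : (R -> Prop) -> Prop) : Prop :=
  nb (fun _ => True) /\ (forall U V, nb U -> nb V -> nb (fun x => U x /\ V x)) /\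
  (forall U V, nb U -> subset U V -> nb V).

Definition separated_from_zero (nb : (R -> Prop) -> Prop) : Prop :=
  forall y, y <> 0 -> exists W r, topology_at0 nb W /\ W 0 /\ 0 < r /\
    forall x, W x -> r <= Rabs (x - y).

Section TopologyAt0.

Variable nb : (R -> Prop) -> Prop.

Lemma topology_at0_sub_eta : tsub (topology_at0 nb) eta.
Proof. now intros U []. Qed.

Lemma topology_at0_ball y r : r <= Rabs y -> topology_at0 nb (fun x => Rabs (x - y) < r).
Proof.
  intro Hr. split; [apply eta_ball|]. rewrite Rminus_0_l, Rabs_Ropp. lra.
Qed.

Lemma topology_at0_is_topology : is_filter nb -> is_topology (topology_at0 nb).
Proof.
  intros (Htop & Hinter & Hsup). split; [|split; [|split]].
  - split; [intros x []|intros []].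
  - split; auto. intros x _. exists 1. split; auto. lra.
  - intros U V [eU nU] [eV nV]. split; [now apply eta_inter|]. intros [U0 V0]. auto.
  - intros F HF. split.
    + apply eta_local. intros x (U & FU & Ux). exists U.
      split; [apply HF; auto|]. split; auto. intros y Uy. eauto.
    + intros (U & FU & U0). apply (Hsup U); [now apply HF|]. intros y Uy. eauto.
Qed.

Lemma topology_at0_union2 U V : is_filter nb -> topology_at0 nb U -> topology_at0 nb V ->
  topology_at0 nb (fun x => U x \/ V x).
Proof.
  intros Hf HU HV.
  destruct (topology_at0_is_topology Hf) as (_ & _ & _ & Hunion).
  specialize (Hunion (fun W => W = U \/ W = V)).
  assert (E : (fun x => exists W, (W = U \/ W = V) /\ W x) = (fun x => U x \/ V x)).
  { apply functional_extensionality. intro x. apply propositional_extensionality.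
    split; [intros (W & [-> | ->] & Wx); auto|intros [Ux|Vx]; eauto]. }
  rewrite <- E. apply Hunion. now intros W [-> | ->].
Qed.

Lemma topology_at0_hausdorff : separated_from_zero nb -> hausdorff (topology_at0 nb).
Proof.
  intros Hsep.
  assert (Hzero : forall y, y <> 0 -> exists U V, topology_at0 nb U /\ topology_at0 nb V /\
            U 0 /\ V y /\ (forall z, U z -> V z -> False)).
  { intros y Hy. destruct (Hsep y Hy) as (W & r & HW & W0 & Hr & HWr).
    pose proof (Rabs_pos_lt y Hy). pose proof (Rmin_l r (Rabs y)).
    exists W, (fun z => Rabs (z - y) < Rmin r (Rabs y)).
    split; [|split; [apply topology_at0_ball, Rmin_r|split; [|split]]]; auto.
    - rewrite Rminus_diag, Rabs_R0. now apply Rmin_pos.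
    - intros z Wz Hz. specialize (HWr z Wz). lra. }
  intros x y Hxy.
  destruct (Req_dec x 0) as [->|Hx]; [now apply Hzero|].
  destruct (Req_dec y 0) as [->|Hy].
  - destruct (Hzero x Hx) as (U & V & HU & HV & U0 & Vx & Hd). exists V, U. eauto 7.
  - set (s := Rmin (Rabs (x - y) / 2) (Rmin (Rabs x) (Rabs y))).
    assert (Hxy' : 0 < Rabs (x - y)) by (apply Rabs_pos_lt; lra).
    assert (Hs : 0 < s) by (repeat apply Rmin_pos; try apply Rabs_pos_lt; lra).
    assert (s <= Rabs (x - y) / 2) by apply Rmin_l.
    assert (s <= Rabs x /\ s <= Rabs y) as [].
    { pose proof (Rmin_r (Rabs (x - y) / 2) (Rmin (Rabs x) (Rabs y))).
      pose proof (Rmin_l (Rabs x) (Rabs y)). pose proof (Rmin_r (Rabs x) (Rabs y)).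
      unfold s. lra. }
    exists (fun z => Rabs (z - x) < s), (fun z => Rabs (z - y) < s).
    split; [|split; [|split; [|split]]];
      try (apply topology_at0_ball; auto); try (rewrite Rminus_diag, Rabs_R0; auto).
    intros z Hz1 Hz2. pose proof (Rabs_sub_triang x z y) as Htri.
    rewrite (Rabs_minus_sym x z) in Htri. lra.
Qed.

Lemma topology_at0_nbhd_filter a : a <> 0 -> nbhd_filter (topology_at0 nb) a = nbhd_filter eta a.
Proof.
  intro Ha. apply functional_extensionality. intro A. apply propositional_extensionality.
  split; intros (U & HU & Ua & UA).
  - exists U. split; auto. apply HU.
  - exists (fun x => U x /\ Rabs (x - a) < Rabs a). split; [split|split; [split|]]; auto.
    + apply eta_inter; auto. apply eta_ball.
    + intros [_ H]. rewrite Rminus_0_l, Rabs_Ropp in H. lra.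
    + rewrite Rminus_diag, Rabs_R0. now apply Rabs_pos_lt.
    + intros x [Ux _]. auto.
Qed.

Lemma topology_at0_in_L0 : is_filter nb -> separated_from_zero nb -> in_L0 (topology_at0 nb).
Proof.
  intros Hf Hs. split; [split; [|split]|].
  - now apply topology_at0_is_topology.
  - now apply topology_at0_hausdorff.
  - apply topology_at0_sub_eta.
  - intros a Ha. apply NNPP. intro Ha0. now apply Ha, topology_at0_nbhd_filter.
Qed.

End TopologyAt0.

(** * Spike neighbourhoods of 0 *)

Inductive shape := Stop | Punctured | Overhang | Uniform.

Definition overhang (s : shape) (e d : R) : R :=
  match s with Stop => 0 | Punctured | Overhang => d | Uniform => e end.

Definition spike_nbhd (s : shape) (c : Z -> R) (e : R) (N : Z) (d : Z -> R) (x : R) : Prop :=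
  Rabs x < e \/ exists n : Z, (N <= n)%Z /\ IZR n - e < x < IZR n + c n + overhang s e (d n) /\
    (s = Punctured -> x <> IZR n + c n).

(* Small enough that spikes at different integers stay apart, anchors lying in [0, 3/4]. *)
Definition admissible (e : R) (N : Z) (d : Z -> R) : Prop :=
  0 < e <= 1/8 /\ (1 <= N)%Z /\ forall n, 0 < d n <= 1/16.

Definition spike_filter (s : shape) (c : Z -> R) (U : R -> Prop) : Prop :=
  exists e N d, admissible e N d /\ subset (spike_nbhd s c e N d) U.

Definition spike_topology (s : shape) (c : Z -> R) : topo := topology_at0 (spike_filter s c).

Definition bounded_by (m M : R) (c : Z -> R) : Prop := forall n, m <= c n <= M.

Lemma overhang_bounds s e d : 0 < e <= 1/8 -> 0 < d <= 1/16 -> 0 <= overhang s e d <= 1/8.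
Proof. intros. destruct s; simpl; lra. Qed.

Lemma overhang_mono s e d e' d' : e' <= e -> d' <= d -> overhang s e' d' <= overhang s e d.
Proof. intros. destruct s; simpl; lra. Qed.

Lemma overhang_le_width s e d : s <> Uniform -> 0 < d -> overhang s e d <= d.
Proof. intros. destruct s; simpl; try lra. easy. Qed.

Lemma admissible_const e N w : 0 < e <= 1/8 -> (1 <= N)%Z -> 0 < w <= 1/16 ->
  admissible e N (fun _ => w).
Proof. intros. split; [|split]; auto. Qed.

Lemma admissible_default : admissible (1/8) 1 (fun _ => 1/16).
Proof. apply admissible_const; lra || lia. Qed.

Lemma spike_nbhd_mono s c e N d e' N' d' : e' <= e -> (N <= N')%Z -> (forall n, d' n <= d n) ->
  subset (spike_nbhd s c e' N' d') (spike_nbhd s c e N d).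
Proof.
  intros He HN Hd x [H|(n & Hn & Hx & Hp)]; [left; lra|].
  right. exists n. pose proof (overhang_mono s e (d n) e' (d' n) He (Hd n)).
  split; [lia|]. split; auto. lra.
Qed.

Lemma spike_nbhd_zero s c e N d : 0 < e -> spike_nbhd s c e N d 0.
Proof. intro. left. now rewrite Rabs_R0. Qed.

Lemma spike_nbhd_eta s c e N d : eta (spike_nbhd s c e N d).
Proof.
  apply eta_local. intros x [Hx|(n & Hn & Hx & Hp)].
  - exists (fun y => Rabs (y - 0) < e). split; [apply eta_ball|].
    rewrite Rminus_0_r. split; auto. intros y Hy. left. now rewrite Rminus_0_r in Hy.
  - set (I := fun y => IZR n - e < y < IZR n + c n + overhang s e (d n)).
    destruct (classic (s = Punctured)) as [Hs|Hs].
    + exists (fun y => I y /\ y <> IZR n + c n).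
      split; [apply eta_remove_point, eta_interval|]. split; [split; auto|].
      intros y [Iy Hy]. right. eauto.
    + exists I. split; [apply eta_interval|]. split; auto.
      intros y Iy. right. exists n. split; [auto|]. split; [exact Iy|]. intro; contradiction.
Qed.

Lemma spike_nbhd_open s c e N d : admissible e N d -> spike_topology s c (spike_nbhd s c e N d).
Proof.
  intro Hp. split; [apply spike_nbhd_eta|]. intros _. exists e, N, d. split; auto. easy.
Qed.

Lemma spike_filter_is_filter s c : is_filter (spike_filter s c).
Proof.
  split; [|split].
  - exists (1/8), 1%Z, (fun _ => 1/16). split; [apply admissible_default|easy].
  - intros U V (e1 & N1 & d1 & (He1 & HN1 & Hd1) & H1) (e2 & N2 & d2 & (He2 & HN2 & Hd2) & H2).
    exists (Rmin e1 e2), (Z.max N1 N2), (fun n => Rmin (d1 n) (d2 n)).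
    pose proof (Rmin_l e1 e2). pose proof (Rmin_r e1 e2).
    split; [split; [split; [apply Rmin_pos|]|split]; try lra; try lia|].
    + intro n. specialize (Hd1 n). specialize (Hd2 n). pose proof (Rmin_l (d1 n) (d2 n)).
      split; [apply Rmin_pos|]; lra.
    + intros x Hx. split; [apply H1|apply H2];
        refine (spike_nbhd_mono _ _ _ _ _ _ _ _ _ _ _ _ Hx); try lra; try lia;
        intro n; [apply Rmin_l|apply Rmin_r].
  - intros U V (e & N & d & Hp & H) HUV. exists e, N, d. split; auto. intros x Hx. auto.
Qed.

Lemma spike_separated s c : separated_from_zero (spike_filter s c).
Proof.
  intros y Hy.
  assert (Hy0 : 0 < Rabs y) by now apply Rabs_pos_lt.
  set (e := Rmin (1/8) (Rabs y / 2)).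
  set (N := Z.max 1 (Int_part (Rabs y) + 2)).
  assert (He : 0 < e) by (apply Rmin_pos; lra).
  assert (He1 : e <= 1/8) by apply Rmin_l.
  assert (He2 : e <= Rabs y / 2) by apply Rmin_r.
  exists (spike_nbhd s c e N (fun _ => 1/16)), (Rmin (Rabs y / 2) (1/2)).
  split; [apply spike_nbhd_open, admissible_const; lra || (unfold N; lia)|].
  split; [now apply spike_nbhd_zero|]. split; [apply Rmin_pos; lra|].
  pose proof (Rmin_l (Rabs y / 2) (1/2)). pose proof (Rmin_r (Rabs y / 2) (1/2)).
  intros x [Hx|(n & Hn & Hx & _)].
  - pose proof (Rabs_sub_triang 0 x y) as Htri.
    rewrite Rminus_0_l, Rabs_Ropp, Rminus_0_l, Rabs_Ropp in Htri. lra.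
  - assert (IZR (Int_part (Rabs y)) + 2 <= IZR n).
    { rewrite <- plus_IZR. apply IZR_le. unfold N in Hn. lia. }
    pose proof (Int_part_bounds (Rabs y)). pose proof (Rle_abs (x - y)). pose proof (Rle_abs y).
    lra.
Qed.

Lemma spike_topology_in_L0 s c : in_L0 (spike_topology s c).
Proof. apply topology_at0_in_L0; [apply spike_filter_is_filter|apply spike_separated]. Qed.

Lemma spike_topology_sub s c s' c' :
  (forall e' N' d', admissible e' N' d' -> exists e N d, admissible e N d /\
      subset (spike_nbhd s c e N d) (spike_nbhd s' c' e' N' d')) ->
  tsub (spike_topology s' c') (spike_topology s c).
Proof.
  intros H U [HU HU0]. split; auto. intro U0.
  destruct (HU0 U0) as (e' & N' & d' & Hp & HB).
  destruct (H e' N' d' Hp) as (e & N & d & Hp2 & HB2).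
  exists e, N, d. split; auto. intros x Hx. auto.
Qed.

Lemma spike_topology_neq s c s' c' e N d : admissible e N d ->
  (forall e' N' d', admissible e' N' d' ->
     exists x, spike_nbhd s' c' e' N' d' x /\ ~ spike_nbhd s c e N d x) ->
  spike_topology s c <> spike_topology s' c'.
Proof.
  intros Hp H E.
  assert (O : spike_topology s' c' (spike_nbhd s c e N d))
    by (rewrite <- E; now apply spike_nbhd_open).
  destruct O as [_ O]. destruct O as (e' & N' & d' & Hp' & HB).
  { apply spike_nbhd_zero, Hp. }
  destruct (H e' N' d' Hp') as (x & H1 & H2). auto.
Qed.

Lemma spike_nbhd_tooth s c e N d n x : admissible e N d -> bounded_by 0 (3/4) c ->
  1 <= x -> IZR n <= x -> x < IZR n + 7/8 -> spike_nbhd s c e N d x ->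
  (N <= n)%Z /\ x < IZR n + c n + overhang s e (d n) /\ (s = Punctured -> x <> IZR n + c n).
Proof.
  intros (He & HN & Hd) Hc H1 Hx1 Hx2 [H|(m & Hm & Hmx & Hp)].
  - pose proof (Rle_abs x). lra.
  - pose proof (overhang_bounds s e (d m) He (Hd m)). pose proof (Hc m).
    assert (m = n) as -> by (apply Z_eq_of_IZR_close; lra). tauto.
Qed.

Definition eventually_lt (c c' : Z -> R) : Prop :=
  exists N0, forall n, (N0 <= n)%Z -> c n < c' n.

Definition gap_width (c c' : Z -> R) (n : Z) : R :=
  if Rlt_dec (c n) (c' n) then Rmin (1/16) ((c' n - c n) / 2) else 1/16.

Lemma gap_width_spec c c' n : 0 < gap_width c c' n <= 1/16 /\
  (c n < c' n -> gap_width c c' n <= (c' n - c n) / 2).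
Proof.
  unfold gap_width. destruct (Rlt_dec (c n) (c' n)).
  - split; [split; [apply Rmin_pos; lra|apply Rmin_l]|]. intros _. apply Rmin_r.
  - split; [lra|]. easy.
Qed.

Lemma admissible_gap_width c c' e N : 0 < e <= 1/8 -> (1 <= N)%Z ->
  admissible e N (gap_width c c').
Proof. intros. split; [|split]; auto. intro n. apply gap_width_spec. Qed.

(* A spike stopping at [c n] plus a gap width fits into every spike anchored at [c' n > c n]. *)
Lemma spike_topology_sub_of_lt s c s' c' : s <> Uniform -> eventually_lt c c' ->
  tsub (spike_topology s' c') (spike_topology s c).
Proof.
  intros Hs [N0 HN0]. apply spike_topology_sub. intros e' N' d' (He & HN & Hd).
  exists e', (Z.max N' N0), (gap_width c c').
  split; [apply admissible_gap_width; auto; lia|].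
  intros x [Hx|(n & Hn & Hx & _)]; [now left|].
  right. exists n. assert (Hlt : c n < c' n) by (apply HN0; lia).
  destruct (gap_width_spec c c' n) as [Hg1 Hg2]. specialize (Hg2 Hlt).
  pose proof (overhang_le_width s e' (gap_width c c' n) Hs (proj1 Hg1)).
  pose proof (overhang_bounds s' e' (d' n) He (Hd n)).
  split; [lia|]. split; [lra|]. intros _. lra.
Qed.

Lemma spike_topology_neq_of_lt s c s' c' : s <> Uniform ->
  bounded_by (1/4) (3/4) c -> bounded_by (1/4) (3/4) c' -> eventually_lt c c' ->
  spike_topology s c <> spike_topology s' c'.
Proof.
  intros Hs Hc Hc' [N0 HN0].
  assert (Hp : admissible (1/8) 1 (gap_width c c')) by (apply admissible_gap_width; lra || lia).
  apply (spike_topology_neq _ _ _ _ _ _ _ Hp). intros e' N' d' (He & HN & Hd).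
  set (n := Z.max (Z.max N' N0) 1).
  assert (Hlt : c n < c' n) by (apply HN0; unfold n; lia).
  assert (Hn1 : 1 <= IZR n) by (apply IZR_le; unfold n; lia).
  pose proof (Hc n). pose proof (Hc' n).
  exists (IZR n + (c n + c' n) / 2). split.
  - right. exists n. pose proof (overhang_bounds s' e' (d' n) He (Hd n)).
    split; [unfold n; lia|]. split; [lra|]. intros _. lra.
  - intro HB. apply (spike_nbhd_tooth _ _ _ _ _ n) in HB as (_ & HB & _);
      [|exact Hp|intro m; specialize (Hc m); lra|lra..].
    destruct (gap_width_spec c c' n) as [Hg1 Hg2].
    pose proof (overhang_le_width s (1/8) (gap_width c c' n) Hs (proj1 Hg1)).
    specialize (Hg2 Hlt). lra.
Qed.

Definition uniform_topology (t : R) : topo := spike_topology Uniform (fun _ => t).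

Lemma spike_topology_sub_uniform s c t : s <> Uniform -> (forall m, 1/4 <= c m) ->
  0 < t <= 1/16 -> tsub (spike_topology s c) (uniform_topology t).
Proof.
  intros Hs Hc Ht. apply spike_topology_sub. intros e' N' d' (He & HN & Hd).
  pose proof (Rmin_l e' (1/16)). pose proof (Rmin_r e' (1/16)).
  exists (Rmin e' (1/16)), N', (fun _ => 1/16).
  split; [apply admissible_const; try split; try apply Rmin_pos; auto; lra|].
  intros x [Hx|(n & Hn & Hx & _)]; [left; lra|].
  right. exists n. simpl in Hx. pose proof (Hc n).
  pose proof (overhang_bounds s e' (d' n) He (Hd n)).
  split; auto. split; [lra|]. intros _. lra.
Qed.

Lemma uniform_topology_antitone t t' : t <= t' -> tsub (uniform_topology t') (uniform_topology t).
Proof.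
  intro Ht. apply spike_topology_sub. intros e' N' d' Hp. exists e', N', d'. split; auto.
  intros x [Hx|(n & Hn & Hx & _)]; [now left|].
  right. exists n. simpl in *. split; auto. split; [lra|]. easy.
Qed.

Lemma uniform_topology_neq t t' : 0 < t < t' -> t' <= 1/16 ->
  uniform_topology t <> uniform_topology t'.
Proof.
  intros Ht Ht'. set (e := Rmin (1/8) (t' - t)).
  assert (He : 0 < e) by (apply Rmin_pos; lra).
  assert (He1 : e <= 1/8) by apply Rmin_l. assert (He2 : e <= t' - t) by apply Rmin_r.
  assert (Hp : admissible e 1 (fun _ => 1/16)) by (apply admissible_const; lra || lia).
  apply (spike_topology_neq _ _ _ _ _ _ _ Hp). intros e' N' d' (He' & HN & Hd).
  set (n := Z.max N' 1).
  assert (Hn1 : 1 <= IZR n) by (apply IZR_le; unfold n; lia).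
  exists (IZR n + t + e). split.
  - right. exists n. simpl. split; [unfold n; lia|]. split; [lra|]. easy.
  - intro HB. apply (spike_nbhd_tooth _ _ _ _ _ n) in HB as (_ & HB & _);
      [|exact Hp|intro m; lra|lra..].
    simpl in HB. lra.
Qed.

(* The perturbation [d / (8 (|d| + |n| + 1))] is strictly increasing in [d] but tends to 0 in [n],
   so two anchor sequences are eventually ordered lexicographically by [(a, d)]. *)
Definition anchor (a d : R) (n : Z) : R := a + d / (8 * (Rabs d + Rabs (IZR n) + 1)).

Definition lex_lt (a d a' d' : R) : Prop := a < a' \/ (a = a' /\ d < d').

Lemma perturbation_bounds d K : 1 <= K ->
  Rabs (d / (8 * (Rabs d + K))) <= Rabs d / (8 * K) /\ Rabs (d / (8 * (Rabs d + K))) < 1/8.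
Proof.
  intro HK. pose proof (Rabs_pos d).
  unfold Rdiv. rewrite Rabs_mult, Rabs_inv, (Rabs_pos_eq (8 * _)) by lra.
  split.
  - apply Rmult_le_compat_l; [lra|]. apply Rinv_le_contravar; lra.
  - apply (Rdiv_lt_of_lt_mul (Rabs d)); lra.
Qed.

Lemma anchor_bounded a d : 3/8 <= a <= 5/8 -> bounded_by (1/4) (3/4) (anchor a d).
Proof.
  intros Ha n. unfold anchor. pose proof (Rabs_pos (IZR n)).
  replace (Rabs d + Rabs (IZR n) + 1) with (Rabs d + (Rabs (IZR n) + 1)) by ring.
  destruct (perturbation_bounds d (Rabs (IZR n) + 1)) as [_ Hp]; [lra|].
  apply Rabs_lt_between in Hp. lra.
Qed.

Lemma anchor_lt_of_lt_d a d d' n : d < d' -> anchor a d n < anchor a d' n.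
Proof.
  intro Hd. unfold anchor. pose proof (Rabs_pos (IZR n)). set (K := Rabs (IZR n) + 1).
  replace (Rabs d + Rabs (IZR n) + 1) with (Rabs d + K) by (unfold K; ring).
  replace (Rabs d' + Rabs (IZR n) + 1) with (Rabs d' + K) by (unfold K; ring).
  assert (HK : 1 <= K) by (unfold K; lra).
  pose proof (Rabs_pos d). pose proof (Rabs_pos d').
  assert (E : d' / (8 * (Rabs d' + K)) - d / (8 * (Rabs d + K)) =
     (d' * (Rabs d + K) - d * (Rabs d' + K)) / (8 * ((Rabs d + K) * (Rabs d' + K))))
    by (field; lra).
  assert (0 < d' * (Rabs d + K) - d * (Rabs d' + K)).
  { destruct (Rle_dec 0 d); destruct (Rle_dec 0 d').
    - rewrite (Rabs_pos_eq d), (Rabs_pos_eq d') by auto. nra.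
    - lra.
    - rewrite (Rabs_left d), (Rabs_pos_eq d') by lra. nra.
    - rewrite (Rabs_left d), (Rabs_left d') by lra. nra. }
  assert (0 < (d' * (Rabs d + K) - d * (Rabs d' + K)) / (8 * ((Rabs d + K) * (Rabs d' + K))))
    by (apply Rdiv_lt_0_compat; nra).
  lra.
Qed.

Lemma anchor_eventually_lt a d a' d' : a < a' -> eventually_lt (anchor a d) (anchor a' d').
Proof.
  intro Ha. set (X := (Rabs d + Rabs d') / (8 * (a' - a))).
  destruct (eventually_Z_gt X) as [N0 HN0].
  exists (Z.max 0 N0). intros n Hn. specialize (HN0 n ltac:(lia)).
  assert (Hn0 : 0 <= IZR n) by (apply IZR_le; lia).
  unfold anchor. rewrite (Rabs_pos_eq (IZR n)) by lra. set (K := IZR n + 1).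
  replace (Rabs d + IZR n + 1) with (Rabs d + K) by (unfold K; ring).
  replace (Rabs d' + IZR n + 1) with (Rabs d' + K) by (unfold K; ring).
  assert (HK : 1 <= K) by (unfold K; lra).
  destruct (perturbation_bounds d K HK) as [B1 _].
  destruct (perturbation_bounds d' K HK) as [B2 _].
  apply Rabs_le_between in B1, B2.
  assert (Rabs d / (8 * K) + Rabs d' / (8 * K) < a' - a).
  { replace (Rabs d / (8 * K) + Rabs d' / (8 * K)) with ((Rabs d + Rabs d') / (8 * K))
      by (field; lra).
    apply Rdiv_lt_of_lt_mul; [lra|].
    assert (E : X * (8 * (a' - a)) = Rabs d + Rabs d') by (unfold X; field; lra).
    assert (0 < (K - X) * (a' - a)) by (apply Rmult_lt_0_compat; unfold K; lra).
    nra. }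
  lra.
Qed.

Lemma anchor_eventually_lt_of_lex a d a' d' : lex_lt a d a' d' ->
  eventually_lt (anchor a d) (anchor a' d').
Proof.
  intros [Ha|[<- Hd]]; [now apply anchor_eventually_lt|].
  exists 0%Z. intros n _. now apply anchor_lt_of_lt_d.
Qed.

Lemma lex_lt_trichotomy a d a' d' : lex_lt a d a' d' \/ lex_lt a' d' a d \/ (a = a' /\ d = d').
Proof.
  unfold lex_lt. destruct (Rtotal_order a a') as [H|[H|H]]; auto.
  destruct (Rtotal_order d d') as [G|[G|G]]; auto.
Qed.

(** * Dense, pairwise disjoint classes of dyadic rationals *)

Fixpoint two_adic_val (p : positive) : nat :=
  match p with xO q => S (two_adic_val q) | _ => O end.

Fixpoint odd_part (p : positive) : positive := match p with xO q => odd_part q | _ => p end.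

Definition shift_pos (p : positive) (k : nat) : positive := Nat.iter k xO p.

Definition pos_odd (p : positive) : Prop := match p with xO _ => False | _ => True end.

Lemma shift_pos_odd_part p : shift_pos (odd_part p) (two_adic_val p) = p.
Proof. induction p; simpl; auto. unfold shift_pos in *. simpl. now rewrite IHp. Qed.

Lemma odd_part_odd p : pos_odd (odd_part p).
Proof. induction p; simpl; auto. Qed.

Lemma two_adic_val_shift_pos o k : pos_odd o ->
  two_adic_val (shift_pos o k) = k /\ odd_part (shift_pos o k) = o.
Proof.
  intro Ho. induction k; simpl.
  - destruct o; simpl in *; auto; contradiction.
  - unfold shift_pos in *. simpl. destruct IHk as [-> ->]. auto.
Qed.

Lemma IZR_shift_pos o k : IZR (Zpos (shift_pos o k)) = IZR (Zpos o) * 2 ^ k.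
Proof.
  induction k; simpl; [ring|]. unfold shift_pos in *. simpl.
  rewrite Pos2Z.inj_xO, mult_IZR, IHk. simpl. ring.
Qed.

Definition shape_index (s : shape) : nat :=
  match s with Stop => 0 | Punctured => 1 | Overhang => 2 | Uniform => 3 end.

(* [p = o 2^v] with [o] odd is sent to [o / 2^(4 v + i)]: the class of shape index [i]
   consists of the positive dyadic rationals whose denominator exponent is [i] modulo 4. *)
Definition dyadic (s : shape) (p : positive) : R :=
  IZR (Zpos (odd_part p)) / 2 ^ (4 * two_adic_val p + shape_index s).

Lemma dyadic_pos s p : 0 < dyadic s p.
Proof. unfold dyadic. apply Rdiv_lt_0_compat; [apply IZR_lt; lia|apply pow_lt; lra]. Qed.

Lemma dyadic_inj s s' p p' : dyadic s p = dyadic s' p' -> s = s' /\ p = p'.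
Proof.
  intro E. unfold dyadic in E.
  set (k := (4 * two_adic_val p + shape_index s)%nat) in E.
  set (k' := (4 * two_adic_val p' + shape_index s')%nat) in E.
  assert (E2 : IZR (Zpos (odd_part p)) * 2 ^ k' = IZR (Zpos (odd_part p')) * 2 ^ k).
  { pose proof (pow_lt 2 k ltac:(lra)). pose proof (pow_lt 2 k' ltac:(lra)).
    apply (f_equal (fun r => r * 2 ^ k * 2 ^ k')) in E. field_simplify in E; lra. }
  rewrite <- !IZR_shift_pos in E2. apply eq_IZR in E2. injection E2 as E3.
  destruct (two_adic_val_shift_pos (odd_part p) k' (odd_part_odd p)) as [A1 B1].
  destruct (two_adic_val_shift_pos (odd_part p') k (odd_part_odd p')) as [A2 B2].
  rewrite E3 in A1, B1. rewrite A1 in A2. rewrite B1 in B2.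
  assert (two_adic_val p = two_adic_val p' /\ shape_index s = shape_index s') as [V I].
  { unfold k, k' in A2. destruct s, s'; simpl in *; lia. }
  split; [destruct s, s'; simpl in I; congruence|].
  rewrite <- (shift_pos_odd_part p), <- (shift_pos_odd_part p'), B2, V. auto.
Qed.

Definition class_point (s : shape) (z : Z) : R :=
  match z with Z0 => dyadic s 1 | Zpos p => dyadic s (Pos.succ p) | Zneg p => - dyadic s p end.

Lemma class_point_inj s s' z z' : class_point s z = class_point s' z' -> s = s' /\ z = z'.
Proof.
  intro E. destruct z as [|p|p], z' as [|p'|p']; simpl in E;
    try match type of E with
        | context [- dyadic ?s ?p = dyadic ?s' ?p'] =>
            pose proof (dyadic_pos s p); pose proof (dyadic_pos s' p'); lra
        | context [dyadic ?s ?p = - dyadic ?s' ?p'] =>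
            pose proof (dyadic_pos s p); pose proof (dyadic_pos s' p'); lra
        end.
  - apply dyadic_inj in E as [-> _]. auto.
  - apply dyadic_inj in E as [_ E]. symmetry in E. now apply Pos.succ_not_1 in E.
  - apply dyadic_inj in E as [_ E]. now apply Pos.succ_not_1 in E.
  - apply dyadic_inj in E as [-> E]. apply Pos.succ_inj in E. now subst.
  - assert (E' : dyadic s p = dyadic s' p') by lra. apply dyadic_inj in E' as [-> ->]. auto.
Qed.

Lemma pow2_ge_INR m : INR m <= 2 ^ m.
Proof.
  induction m; [simpl; lra|]. rewrite S_INR. simpl.
  assert (1 <= 2 ^ m) by (apply pow_R1_Rle; lra). lra.
Qed.

Lemma odd_between w : exists m : Z, Z.odd m = true /\ w < IZR m <= w + 2.
Proof.
  pose proof (Int_part_bounds w).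
  destruct (Z.odd (Int_part w + 1)) eqn:E.
  - exists (Int_part w + 1)%Z. split; auto. rewrite plus_IZR. lra.
  - exists (Int_part w + 2)%Z. split.
    + replace (Int_part w + 2)%Z with (Z.succ (Int_part w + 1)) by lia.
      now rewrite Z.odd_succ, <- Z.negb_odd, E.
    + rewrite plus_IZR. lra.
Qed.

Lemma dyadic_of_odd s o k : pos_odd o ->
  dyadic s (shift_pos o k) = IZR (Zpos o) / 2 ^ (4 * k + shape_index s).
Proof. intro Ho. unfold dyadic. now destruct (two_adic_val_shift_pos o k Ho) as [-> ->]. Qed.

Lemma class_point_dense s u v : u < v -> exists z, u < class_point s z < v.
Proof.
  intro Huv.
  destruct (eventually_Z_gt (2 / (v - u))) as [N0 HN0].
  set (k := Z.to_nat (Z.max 0 N0)).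
  assert (Hk : 2 / (v - u) < INR k).
  { unfold k. rewrite INR_IZR_INZ, Z2Nat.id by lia. apply HN0. lia. }
  set (M := 2 ^ (4 * k + shape_index s)).
  assert (HM : INR k <= M).
  { unfold M. eapply Rle_trans; [apply pow2_ge_INR|]. apply Rle_pow; [lra|lia]. }
  assert (HM0 : 0 < M) by (apply pow_lt; lra).
  assert (H2 : 2 < (v - u) * M).
  { assert (2 / (v - u) * (v - u) = 2) by (field; lra). nra. }
  destruct (odd_between (u * M)) as (m & Hm & B1 & B2).
  assert (Hval : u < IZR m / M < v).
  { split; [apply Rlt_div_of_mul_lt|apply Rdiv_lt_of_lt_mul]; lra. }
  destruct m as [|o|o]; try discriminate;
    assert (Ho : pos_odd o) by (destruct o; simpl in *; auto; discriminate);
    pose proof (dyadic_of_odd s o k Ho) as Ep; fold M in Ep.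
  - destruct (Pos.eq_dec (shift_pos o k) 1) as [P1|P1].
    + exists Z0. simpl. rewrite <- P1, Ep. auto.
    + exists (Zpos (Pos.pred (shift_pos o k))). simpl.
      rewrite Pos.succ_pred by auto. now rewrite Ep.
  - exists (Zneg (shift_pos o k)). simpl. rewrite Ep.
    rewrite <- Pos2Z.opp_pos, opp_IZR in Hval. unfold Rdiv in *. lra.
Qed.

(** * The three interleaved chains *)

Lemma tsub_antisym X Y : tsub X Y -> tsub Y X -> X = Y.
Proof.
  intros H1 H2. apply functional_extensionality. intro U.
  apply propositional_extensionality. split; auto.
Qed.

Lemma spike_topology_lt_of_lex s s' a d a' d' : s <> Uniform ->
  3/8 <= a <= 5/8 -> 3/8 <= a' <= 5/8 -> lex_lt a d a' d' ->
  tsub (spike_topology s' (anchor a' d')) (spike_topology s (anchor a d)) /\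
  spike_topology s (anchor a d) <> spike_topology s' (anchor a' d').
Proof.
  intros Hs Ha Ha' Hlex. apply anchor_eventually_lt_of_lex in Hlex.
  split; [now apply spike_topology_sub_of_lt|].
  apply spike_topology_neq_of_lt; auto; now apply anchor_bounded.
Qed.

(* A real [x] is coded by [(fan_level x, fan_code s x)]; since the shapes use disjoint code
   classes, the codes of the three fan families are pairwise distinct and densely interleaved. *)
Definition fan_level (x : R) : R := 3/8 + frac_part x / 4.
Definition fan_code (s : shape) (x : R) : R := class_point s (Int_part x).

Definition fan_topology (s : shape) (x : R) : topo :=
  spike_topology s (anchor (fan_level x) (fan_code s x)).

Definition fan_family (s : shape) : topo -> Prop := fun T => exists x, T = fan_topology s x.

Definition fans : topo -> Prop :=
  union3 (fan_family Stop) (fan_family Punctured) (fan_family Overhang).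

Lemma fan_level_bounds x : 3/8 <= fan_level x < 5/8.
Proof. unfold fan_level. destruct (base_fp x). lra. Qed.

Lemma fan_anchor_bounded s x : bounded_by (1/4) (3/4) (anchor (fan_level x) (fan_code s x)).
Proof. apply anchor_bounded. pose proof (fan_level_bounds x). lra. Qed.

Lemma fan_code_inj s s' x y : fan_level x = fan_level y -> fan_code s x = fan_code s' y ->
  s = s' /\ x = y.
Proof.
  intros Hl Hc. apply class_point_inj in Hc as [-> Hc]. split; auto.
  unfold fan_level, frac_part in Hl. rewrite Hc in Hl. lra.
Qed.

Lemma fan_topology_lt s s' x y : s <> Uniform ->
  lex_lt (fan_level x) (fan_code s x) (fan_level y) (fan_code s' y) ->
  tsub (fan_topology s' y) (fan_topology s x) /\ fan_topology s x <> fan_topology s' y.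
Proof.
  intros Hs Hlex. pose proof (fan_level_bounds x). pose proof (fan_level_bounds y).
  apply spike_topology_lt_of_lex; auto; lra.
Qed.

Lemma fans_inv T : fans T -> exists s x, s <> Uniform /\ T = fan_topology s x.
Proof.
  intros [[x ->]|[[x ->]|[x ->]]]; [exists Stop|exists Punctured|exists Overhang]; now exists x.
Qed.

Lemma fan_topology_compare s s' x y : s <> Uniform -> s' <> Uniform ->
  (tsub (fan_topology s' y) (fan_topology s x) /\ fan_topology s x <> fan_topology s' y /\
     lex_lt (fan_level x) (fan_code s x) (fan_level y) (fan_code s' y)) \/
  (tsub (fan_topology s x) (fan_topology s' y) /\ fan_topology s' y <> fan_topology s x /\
     lex_lt (fan_level y) (fan_code s' y) (fan_level x) (fan_code s x)) \/
  (s = s' /\ x = y).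
Proof.
  intros Hs Hs'.
  destruct (lex_lt_trichotomy (fan_level x) (fan_code s x) (fan_level y) (fan_code s' y))
    as [H|[H|[H1 H2]]].
  - left. pose proof (fan_topology_lt s s' x y Hs H). tauto.
  - right; left. pose proof (fan_topology_lt s' s y x Hs' H). tauto.
  - right; right. now apply fan_code_inj.
Qed.

Lemma fan_topology_comparable s s' x y : s <> Uniform -> s' <> Uniform ->
  tsub (fan_topology s x) (fan_topology s' y) \/ tsub (fan_topology s' y) (fan_topology s x).
Proof.
  intros Hs Hs'. destruct (fan_topology_compare s s' x y Hs Hs') as [H|[H|[-> ->]]]; try tauto.
  left. now intros U.
Qed.

Lemma fans_chain : chain fans.
Proof.
  intros X Y (s & x & Hs & ->)%fans_inv (s' & y & Hs' & ->)%fans_inv.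
  now apply fan_topology_comparable.
Qed.

Lemma fan_family_chain s : s <> Uniform -> chain (fan_family s).
Proof. intros Hs X Y [x ->] [y ->]. now apply fan_topology_comparable. Qed.

Lemma fan_family_card s : s <> Uniform -> card_c (fan_family s).
Proof.
  intro Hs. exists (fan_topology s). split; [intro r; now exists r|]. split.
  - intros r r' E.
    destruct (fan_topology_compare s s r r' Hs Hs) as [(_ & H & _)|[(_ & H & _)|[_ H]]]; congruence.
  - intros t [x ->]. now exists x.
Qed.

Lemma lex_lt_interpolate s a1 d1 a2 d2 : 3/8 <= a1 < 5/8 -> lex_lt a1 d1 a2 d2 ->
  exists z, lex_lt a1 d1 (fan_level z) (fan_code s z) /\
    lex_lt (fan_level z) (fan_code s z) a2 d2.
Proof.
  intros Ha Hlex.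
  assert (Hw : exists w, d1 < class_point s w /\ (a1 < a2 \/ class_point s w < d2)).
  { destruct Hlex as [Hlt|[_ Hlt]].
    - destruct (class_point_dense s d1 (d1 + 1)) as [w Hw]; [lra|]. exists w. split; [lra|auto].
    - destruct (class_point_dense s d1 d2 Hlt) as [w Hw]. exists w. split; [lra|right; lra]. }
  destruct Hw as (w & Hw1 & Hw2).
  set (z := IZR w + (a1 - 3/8) * 4).
  assert (Hf : Int_part z = w) by (apply Int_part_eq; unfold z; lra).
  assert (Hl : fan_level z = a1) by (unfold fan_level, frac_part; rewrite Hf; unfold z; field).
  exists z. unfold fan_code. rewrite Hf, Hl. split; [now right|].
  destruct Hlex as [Hlt|[E Hlt]]; [now left|]. right. split; auto. destruct Hw2; lra.
Qed.

Lemma fan_family_dense s : s <> Uniform -> dense_in (fan_family s) fans.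
Proof.
  intros Hs X Y (s1 & x & Hs1 & ->)%fans_inv (s2 & y & Hs2 & ->)%fans_inv HXY HXY'.
  destruct (fan_topology_compare s1 s2 x y Hs1 Hs2)
    as [(H1 & H2 & H3)|[(H1 & H2 & H3)|[-> ->]]].
  - exfalso. now apply HXY', tsub_antisym.
  - pose proof (fan_level_bounds y).
    destruct (lex_lt_interpolate s (fan_level y) (fan_code s2 y) _ _ ltac:(lra) H3)
      as (z & Z1 & Z2).
    destruct (fan_topology_lt s2 s y z Hs2 Z1) as [A1 A2].
    destruct (fan_topology_lt s s1 z x Hs Z2) as [B1 B2].
    exists (fan_topology s z). split; [now exists z|]. split; [exact B2|].
    split; [congruence|]. split; assumption.
  - easy.
Qed.

(** * Failure of regularity *)

Definition anchors (c : Z -> R) (y : R) : Prop := exists n, (1 <= n)%Z /\ y = IZR n + c n.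

Lemma anchors_eta_closed c : bounded_by (1/4) (3/4) c -> eta (fun x => ~ anchors c x).
Proof.
  intros Hc x Hx. set (n0 := Int_part x). pose proof (Int_part_bounds x) as Hn0. fold n0 in Hn0.
  destruct (Z_le_gt_dec 1 n0) as [H1|H1].
  - assert (Hne : 0 < Rabs (x - (IZR n0 + c n0))).
    { apply Rabs_pos_lt. intro E. apply Hx. exists n0. split; [auto|lra]. }
    pose proof (Rmin_l (1/8) (Rabs (x - (IZR n0 + c n0)))).
    pose proof (Rmin_r (1/8) (Rabs (x - (IZR n0 + c n0)))).
    exists (Rmin (1/8) (Rabs (x - (IZR n0 + c n0)))). split; [apply Rmin_pos; lra|].
    intros y Hy (m & Hm & ->). pose proof (Hc m). pose proof Hy as Hy'.
    apply Rabs_lt_between in Hy'.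
    assert (m = n0) as -> by (apply Z_eq_of_IZR_close; lra).
    rewrite Rabs_minus_sym in Hy. lra.
  - exists (1/8). split; [lra|]. intros y Hy (m & Hm & ->). pose proof (Hc m).
    apply Rabs_lt_between in Hy. apply IZR_le in Hm.
    assert (IZR n0 <= 0) by (apply IZR_le; lia). lra.
Qed.

Lemma anchors_closed s c : s = Stop \/ s = Punctured -> bounded_by (1/4) (3/4) c ->
  closed_in (spike_topology s c) (anchors c).
Proof.
  intros Hs Hc. split; [now apply anchors_eta_closed|]. intros _.
  exists (1/8), 1%Z, (fun _ => 1/16). split; [apply admissible_default|].
  intros x Hx (m & Hm & ->). pose proof (Hc m). apply IZR_le in Hm.
  apply (spike_nbhd_tooth _ _ _ _ _ m) in Hx as (_ & Hx & Hp);
    [|apply admissible_default|intro k; specialize (Hc k); lra|lra..].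
  destruct Hs as [->| ->]; simpl in *; [lra|now apply Hp].
Qed.

(* Each spike at [n] reaches up to, but never contains, its anchor; so no neighbourhood of 0
   is disjoint from a neighbourhood of the closed set of anchors. *)
Lemma spike_topology_not_regular s c : s = Stop \/ s = Punctured -> bounded_by (1/4) (3/4) c ->
  ~ regular (spike_topology s c).
Proof.
  intros Hs Hc Hreg.
  assert (HF0 : ~ anchors c 0).
  { intros (m & Hm & E). pose proof (Hc m). apply IZR_le in Hm. lra. }
  destruct (Hreg (anchors c) 0 (anchors_closed s c Hs Hc) HF0)
    as (U & V & [_ HU] & [HV _] & U0 & FV & Hd).
  destruct (HU U0) as (e & N & d & ((He & He') & HN & Hdl) & HB).
  assert (VN : V (IZR N + c N)) by (apply FV; now exists N).
  destruct (HV _ VN) as (r & Hr & Hball).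
  set (z := IZR N + c N - Rmin r e / 2).
  assert (0 < Rmin r e) by (apply Rmin_pos; lra).
  pose proof (Rmin_l r e). pose proof (Rmin_r r e). pose proof (Hc N).
  apply (Hd z).
  - apply HB. right. exists N. pose proof (overhang_bounds s e (d N) (conj He He') (Hdl N)).
    split; [lia|]. split; [unfold z; lra|]. intros _. unfold z. lra.
  - apply Hball. unfold z. rewrite Rabs_lt_between. lra.
Qed.

(** * Failure of first countability *)

Lemma nat_choice {A : Type} (P : nat -> A -> Prop) :
  (forall k, exists a, P k a) -> exists f : nat -> A, forall k, P k (f k).
Proof.
  intro H. exists (fun k => proj1_sig (constructive_indefinite_description _ (H k))).
  intro k. apply proj2_sig.
Qed.

Fixpoint min_upto (f : nat -> R) (m : nat) : R :=
  match m with O => f O | S m' => Rmin (min_upto f m') (f (S m')) end.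

Lemma min_upto_pos f m : (forall k, 0 < f k) -> 0 < min_upto f m.
Proof. intro H. induction m; simpl; auto. now apply Rmin_pos. Qed.

Lemma min_upto_le f m k : (k <= m)%nat -> min_upto f m <= f k.
Proof.
  induction m; intro Hk; simpl.
  - replace k with 0%nat by lia. lra.
  - destruct (Nat.eq_dec k (S m)) as [->|E]; [apply Rmin_r|].
    eapply Rle_trans; [apply Rmin_l|]. apply IHm. lia.
Qed.

Lemma spike_nbhd_not_sub_thinner s c e N d d' n : s = Punctured \/ s = Overhang ->
  bounded_by (1/4) (3/4) c -> admissible e N d -> admissible (1/8) 1 d' ->
  (N <= n)%Z -> (1 <= n)%Z -> d' n <= d n / 2 ->
  ~ subset (spike_nbhd s c e N d) (spike_nbhd s c (1/8) 1 d').
Proof.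
  intros Hs Hc (He & HN & Hd) Hp' Hn Hn1 Hdn Hsub.
  assert (Hover : forall e0 w, overhang s e0 w = w) by (destruct Hs as [-> | ->]; reflexivity).
  apply IZR_le in Hn1. pose proof (Hc n). pose proof (Hd n).
  set (x := IZR n + c n + 3/4 * d n).
  assert (Hx : spike_nbhd s c e N d x).
  { right. exists n. rewrite Hover. split; auto. split; [unfold x; lra|]. intros _. unfold x. lra. }
  apply Hsub, (spike_nbhd_tooth _ _ _ _ _ n) in Hx as (_ & Hx & _);
    [|exact Hp'|intro m; specialize (Hc m); lra|unfold x; lra..].
  rewrite Hover in Hx. unfold x in Hx. lra.
Qed.

(* Diagonal argument: a countable base at 0 provides widths [d_k]; half their minimum over
   [k <= n] gives a spike neighbourhood containing none of the basic sets. *)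
Lemma spike_topology_not_first_countable s c : s = Punctured \/ s = Overhang ->
  bounded_by (1/4) (3/4) c -> ~ first_countable (spike_topology s c).
Proof.
  intros Hs Hc Hfc. destruct (Hfc 0) as (b & Hb & Hbase).
  destruct (nat_choice (fun k (p : R * Z * (Z -> R)) =>
      admissible (fst (fst p)) (snd (fst p)) (snd p) /\
      subset (spike_nbhd s c (fst (fst p)) (snd (fst p)) (snd p)) (b k))) as [f Hf].
  { intro k. destruct (Hb k) as [[_ Hk] Hk0]. destruct (Hk Hk0) as (e & N & d & Hp & HB).
    now exists (e, N, d). }
  set (dk k := snd (f k)).
  set (diag (n : Z) := min_upto (fun k => dk k n) (Z.to_nat n) / 2).
  assert (Hdiag : admissible (1/8) 1 diag).
  { split; [lra|]. split; [lia|]. intro n. unfold diag. split.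
    - assert (0 < min_upto (fun k => dk k n) (Z.to_nat n)); [|lra].
      apply min_upto_pos. intro k. apply (proj1 (Hf k)).
    - pose proof (min_upto_le (fun k => dk k n) (Z.to_nat n) 0 ltac:(lia)).
      pose proof (proj2 (proj2 (proj1 (Hf 0%nat))) n). simpl in *. unfold dk in *. lra. }
  destruct (Hbase _ (spike_nbhd_open s c _ _ _ Hdiag) (spike_nbhd_zero s c (1/8) 1 diag ltac:(lra)))
    as [k Hk].
  destruct (Hf k) as [Hpk Hsub].
  set (n := Z.max (snd (fst (f k))) (Z.max 1 (Z.of_nat k))).
  apply (spike_nbhd_not_sub_thinner s c _ _ _ diag n Hs Hc Hpk Hdiag); try (unfold n; lia).
  - unfold diag. pose proof (min_upto_le (fun k0 => dk k0 n) (Z.to_nat n) k ltac:(unfold n; lia)).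
    simpl in *. unfold dk in *. lra.
  - intros x Hx. apply Hk, Hsub, Hx.
Qed.

(** * Complete normality of the [Overhang] topologies *)

Lemma not_in_closure (tau : topo) A x : ~ closure tau A x ->
  exists U, tau U /\ U x /\ forall y, U y -> ~ A y.
Proof.
  intro H. apply NNPP. intro Hno. apply H. intros U HU Ux. apply NNPP. intro Hdisj.
  apply Hno. exists U. split; auto. split; auto. intros y Uy Ay. apply Hdisj. now exists y.
Qed.

Lemma not_in_closure_ball s c B a : ~ closure (spike_topology s c) B a ->
  exists r, 0 < r /\ forall y, Rabs (y - a) < r -> ~ B y.
Proof.
  intros (U & [HU _] & Ua & HUB)%not_in_closure.
  destruct (HU a Ua) as (r & Hr & Hball). exists r. split; auto.
Qed.

Lemma in_closure (tau : topo) A x : A x -> closure tau A x.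
Proof. intros Ax U _ Ux. now exists x. Qed.

(* Half-balls around the nonzero points of [A] whose full balls miss [avoid]; the radius is
   capped by [|a|], so 0 never belongs to a halo. *)
Definition halo (A avoid : R -> Prop) (z : R) : Prop :=
  exists a r, A a /\ 0 < r <= Rabs a /\ (forall y, Rabs (y - a) < r -> ~ avoid y) /\
    Rabs (z - a) < r / 2.

Lemma halo_open s c A avoid : spike_topology s c (halo A avoid).
Proof.
  split.
  - apply eta_local. intros z (a & r & Ha & Hr & Hav & Hz). exists (fun y => Rabs (y - a) < r / 2).
    split; [apply eta_ball|]. split; auto. intros y Hy. exists a, r. auto.
  - intros (a & r & _ & Hr & _ & Hz). exfalso. rewrite Rminus_0_l, Rabs_Ropp in Hz. lra.
Qed.

Lemma halo_avoids A avoid z : halo A avoid z -> ~ avoid z.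
Proof. intros (a & r & _ & Hr & Hav & Hz). apply Hav. lra. Qed.

Lemma halo_contains A avoid a : A a -> a <> 0 ->
  (exists r, 0 < r /\ forall y, Rabs (y - a) < r -> ~ avoid y) -> halo A avoid a.
Proof.
  intros Ha Ha0 (r & Hr & Hav). pose proof (Rabs_pos_lt a Ha0).
  pose proof (Rmin_l r (Rabs a)). pose proof (Rmin_r r (Rabs a)).
  exists a, (Rmin r (Rabs a)). split; auto. split; [split; [apply Rmin_pos|]; lra|].
  split; [intros y Hy; apply Hav; lra|]. rewrite Rminus_diag, Rabs_R0.
  assert (0 < Rmin r (Rabs a)) by (apply Rmin_pos; lra). lra.
Qed.

(* Of two overlapping halos the one with the larger radius contains the other's centre. *)
Lemma halo_disjoint A B C z : subset A C -> halo A B z -> halo B C z -> False.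
Proof.
  intros HAC (a & r & Ha & Hr & HrB & Hza) (b & s & Hb & Hs & HsC & Hzb).
  pose proof (Rabs_sub_triang a z b) as Htri. rewrite (Rabs_minus_sym a z) in Htri.
  destruct (Rle_dec s r).
  - apply (HrB b); auto. rewrite Rabs_minus_sym. lra.
  - apply (HsC a); auto. lra.
Qed.

Section Separation.

Variables (s : shape) (c : Z -> R) (A B : R -> Prop).
Hypothesis HAB : forall x, closure (spike_topology s c) A x -> B x -> False.
Hypothesis HBA : forall x, A x -> closure (spike_topology s c) B x -> False.
Hypothesis HB0 : ~ B 0.

(* [W] is an open set around 0 (if needed) whose closure misses [B]. *)
Lemma separate_with_core W : spike_topology s c W -> (A 0 -> W 0) ->
  (forall b, B b -> exists r, 0 < r /\ forall y, Rabs (y - b) < r -> ~ W y) ->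
  exists U V, spike_topology s c U /\ spike_topology s c V /\ subset A U /\ subset B V /\
      (forall z, U z -> V z -> False).
Proof.
  intros HW HW0 HWb.
  exists (fun z => W z \/ halo A B z), (halo B (fun y => A y \/ W y)).
  split; [apply topology_at0_union2; [apply spike_filter_is_filter|exact HW|apply halo_open]|].
  split; [apply halo_open|]. split; [|split].
  - intros a Aa. destruct (Req_dec a 0) as [->|Ha0]; [left; auto|right].
    apply halo_contains; auto. apply (not_in_closure_ball s c). intro H. now apply (HBA a).
  - intros b Bb. assert (Hb0 : b <> 0) by (intros ->; auto).
    apply halo_contains; auto.
    destruct (not_in_closure_ball s c A b) as (r1 & Hr1 & H1); [intro H; now apply (HAB b)|].
    destruct (HWb b Bb) as (r2 & Hr2 & H2).
    pose proof (Rmin_l r1 r2). pose proof (Rmin_r r1 r2).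
    exists (Rmin r1 r2). split; [now apply Rmin_pos|].
    intros y Hy [Ay|Wy]; [apply (H1 y)|apply (H2 y)]; auto; lra.
  - intros z [Wz|Hz] Hz'.
    + apply (halo_avoids _ _ _ Hz'). now right.
    + apply (halo_disjoint A B (fun y => A y \/ W y) z); auto. intros y Ay. now left.
Qed.

End Separation.

(* Halving [e] and the overhang keeps the Euclidean closure inside the original neighbourhood;
   for the other fan shapes the halved spikes would accumulate at the excluded anchors. *)
Lemma overhang_shrink c e N d b : bounded_by (1/4) (3/4) c -> admissible e N d ->
  ~ spike_nbhd Overhang c e N d b -> exists r, 0 < r /\
    forall y, Rabs (y - b) < r -> ~ spike_nbhd Overhang c (e/2) N (fun n => d n / 2) y.
Proof.
  intros Hc ((He & He') & HN & Hd) Hb.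
  pose proof (Hd (Int_part b)).
  set (r := Rmin (e/2) (d (Int_part b) / 2)).
  assert (Hr : 0 < r) by (apply Rmin_pos; lra).
  assert (Hr1 : r <= e/2) by apply Rmin_l. assert (Hr2 : r <= d (Int_part b) / 2) by apply Rmin_r.
  exists r. split; auto. intros y Hy%Rabs_lt_between [Hy0|(m & Hm & Hmy & _)].
  - apply Hb. left. apply Rabs_lt_between in Hy0. apply Rabs_lt_between. lra.
  - simpl in Hmy. pose proof (Hc m). pose proof (Hd m).
    destruct (Rlt_dec b (IZR m + c m + d m)) as [Hlt|Hge].
    + apply Hb. right. exists m. simpl. split; auto. split; [lra|easy].
    + assert (E : Int_part b = m) by (apply Int_part_eq; lra). rewrite E in Hr2. lra.
Qed.

Lemma overhang_separate c A B :
  (forall x, closure (spike_topology Overhang c) A x -> B x -> False) ->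
  (forall x, A x -> closure (spike_topology Overhang c) B x -> False) -> ~ B 0 ->
  bounded_by (1/4) (3/4) c ->
  exists U V, spike_topology Overhang c U /\ spike_topology Overhang c V /\
    subset A U /\ subset B V /\ (forall z, U z -> V z -> False).
Proof.
  intros HAB HBA HB0 Hc. destruct (classic (A 0)) as [HA0|HA0].
  - destruct (not_in_closure _ _ _ (fun h => HBA 0 HA0 h)) as (O & [_ HO] & O0 & HOB).
    destruct (HO O0) as (e & N & d & Hp & HB).
    assert (Hp2 : admissible (e/2) N (fun n => d n / 2)).
    { destruct Hp as ((He & He') & HN & Hd). split; [lra|]. split; auto.
      intro n. specialize (Hd n). lra. }
    apply (separate_with_core Overhang c A B HAB HBA HB0
             (spike_nbhd Overhang c (e/2) N (fun n => d n / 2))).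
    + now apply spike_nbhd_open.
    + intros _. apply spike_nbhd_zero. apply Hp2.
    + intros b Bb. apply overhang_shrink; auto. intro Hb. exact (HOB b (HB b Hb) Bb).
  - apply (separate_with_core Overhang c A B HAB HBA HB0 (fun _ => False)).
    + split; [intros x []|intros []].
    + easy.
    + intros b _. exists 1. split; [lra|]. intros y _ [].
Qed.

Lemma overhang_completely_normal c : bounded_by (1/4) (3/4) c ->
  completely_normal (spike_topology Overhang c).
Proof.
  intros Hc A B HAB HBA. destruct (classic (B 0)) as [HB0|HB0].
  - assert (HA0 : ~ A 0) by (intro HA0; apply (HBA 0 HA0), in_closure, HB0).
    destruct (overhang_separate c B A (fun x h1 h2 => HBA x h2 h1)
                (fun x h1 h2 => HAB x h2 h1) HA0 Hc) as (U & V & HU & HV & HBU & HAV & Hd).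
    exists V, U. do 4 (split; auto). intros z Vz Uz. now apply (Hd z).
  - now apply overhang_separate.
Qed.

(** * Second countability of the [Stop] topologies *)

Definition grid_interval (j : nat) (p : Z) (y : R) : Prop :=
  IZR p / (INR j + 1) < y < (IZR p + 2) / (INR j + 1) /\ y <> 0.

Definition Z_of_pair (uv : nat * nat) : Z := (Z.of_nat (fst uv) - Z.of_nat (snd uv))%Z.

Definition stop_base (c : Z -> R) (n : nat) : R -> Prop :=
  let (j, k) := Cantor.of_nat n in
  match k with
  | O => spike_nbhd Stop c (1 / (8 * (INR j + 1))) (Z.of_nat j + 1) (fun _ => 1/16)
  | S k' => grid_interval j (Z_of_pair (Cantor.of_nat k'))
  end.

Lemma spike_nbhd_stop_width c e N d d' :
  subset (spike_nbhd Stop c e N d) (spike_nbhd Stop c e N d').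
Proof. intros x [H|(n & Hn & Hx & Hp)]; [now left|right]. now exists n. Qed.

Lemma grid_interval_open s c j p : spike_topology s c (grid_interval j p).
Proof.
  split; [|intros [_ H]; easy].
  apply eta_remove_point, eta_interval.
Qed.

Lemma stop_base_open c n : spike_topology Stop c (stop_base c n).
Proof.
  unfold stop_base. destruct (Cantor.of_nat n) as [j [|k']]; [|apply grid_interval_open].
  pose proof (pos_INR j). apply spike_nbhd_open, admissible_const; try lia; try lra.
  split; [apply Rdiv_lt_0_compat; lra|].
  apply Rmult_le_reg_r with (8 * (INR j + 1)); [lra|].
  replace (1 / (8 * (INR j + 1)) * (8 * (INR j + 1))) with 1 by (field; lra). nra.
Qed.

Lemma stop_base_at0 c U : spike_topology Stop c U -> U 0 ->
  exists n, stop_base c n 0 /\ subset (stop_base c n) U.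
Proof.
  intros [_ HU] U0. destruct (HU U0) as (e & N & d & ((He & He') & HN & Hd) & HB).
  destruct (eventually_Z_gt (1 / e)) as [N0 HN0].
  set (j := Z.to_nat (Z.max N N0)).
  exists (Cantor.to_nat (j, 0%nat)). unfold stop_base. rewrite Cantor.cancel_of_to.
  assert (Hj : 1 / e < INR j + 1).
  { unfold j. rewrite INR_IZR_INZ, Z2Nat.id by lia. specialize (HN0 (Z.max N N0) ltac:(lia)). lra. }
  pose proof (pos_INR j).
  assert (Hej : 1 / (8 * (INR j + 1)) <= e).
  { assert (1 / e * e = 1) by (field; lra).
    apply Rmult_le_reg_r with (8 * (INR j + 1)); [lra|].
    replace (1 / (8 * (INR j + 1)) * (8 * (INR j + 1))) with 1 by (field; lra). nra. }
  split; [apply spike_nbhd_zero, Rdiv_lt_0_compat; lra|].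
  intros y Hy. apply HB, (spike_nbhd_stop_width c e N (fun _ => 1/16)).
  refine (spike_nbhd_mono _ _ _ _ _ _ _ _ Hej _ _ _ Hy); [|intro; lra].
  unfold j. rewrite Z2Nat.id; lia.
Qed.

Lemma grid_interval_small x r : x <> 0 -> 0 < r ->
  exists j p, grid_interval j p x /\ forall y, grid_interval j p y -> Rabs (y - x) < r.
Proof.
  intros Hx Hr. destruct (eventually_Z_gt (4 / r)) as [N0 HN0].
  set (j := Z.to_nat (Z.max 0 N0)). set (J := INR j + 1).
  assert (HJ : 4 / r < J).
  { unfold J, j. rewrite INR_IZR_INZ, Z2Nat.id by lia.
    specialize (HN0 (Z.max 0 N0) ltac:(lia)). lra. }
  assert (HJ0 : 0 < J) by (unfold J; pose proof (pos_INR j); lra).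
  set (p := (Int_part (x * J) - 1)%Z).
  pose proof (Int_part_bounds (x * J)).
  assert (Hp : IZR p = IZR (Int_part (x * J)) - 1) by (unfold p; now rewrite minus_IZR).
  assert (L1 : IZR p / J < x) by (apply Rdiv_lt_of_lt_mul; lra).
  assert (L2 : x < (IZR p + 2) / J) by (apply Rlt_div_of_mul_lt; lra).
  assert (W : (IZR p + 2) / J - IZR p / J = 2 / J) by (field; lra).
  assert (W2 : 2 / J < r).
  { apply Rdiv_lt_of_lt_mul; auto. assert (4 / r * r = 4) by (field; lra). nra. }
  exists j, p. split; [split; auto|].
  intros y [Hy _]. apply Rabs_lt_between. fold J in Hy. lra.
Qed.

Lemma stop_second_countable c : second_countable (spike_topology Stop c).
Proof.
  exists (stop_base c). split; [apply stop_base_open|].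
  intros U x HU Ux. destruct (Req_dec x 0) as [->|Hx]; [now apply stop_base_at0|].
  destruct HU as [HU _]. destruct (HU x Ux) as (r & Hr & Hball).
  destruct (grid_interval_small x r Hx Hr) as (j & p & Hjp & Hsmall).
  exists (Cantor.to_nat (j, S (Cantor.to_nat (Z.to_nat p, Z.to_nat (- p))))).
  unfold stop_base. rewrite !Cantor.cancel_of_to.
  replace (Z_of_pair (Z.to_nat p, Z.to_nat (- p))) with p by (unfold Z_of_pair; simpl; lia).
  split; auto. intros y Hy. now apply Hball, Hsmall.
Qed.

(** * Homeomorphisms between spike topologies of the same shape *)

Definition mono_lipschitz (L : R) (h : R -> R) : Prop :=
  forall x y, x <= y -> 0 <= h y - h x <= L * (y - x).

Definition maps_anchors (c c' : Z -> R) (h : R -> R) : Prop :=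
  forall n, (1 <= n)%Z -> h (IZR n) = IZR n /\ h (IZR n + c n) = IZR n + c' n.

Lemma mono_lipschitz_abs L h : mono_lipschitz L h ->
  forall x y, Rabs (h x - h y) <= L * Rabs (x - y).
Proof.
  intros H x y. destruct (Rle_dec x y) as [Hxy|Hxy].
  - pose proof (H x y Hxy). rewrite !Rabs_left1 by lra. lra.
  - pose proof (H y x ltac:(lra)). rewrite !Rabs_pos_eq by lra. lra.
Qed.

Lemma mono_lipschitz_strict L h g : (forall x, g (h x) = x) -> mono_lipschitz L h ->
  forall x y, x < y -> h x < h y.
Proof.
  intros Hgh Hh x y Hxy. pose proof (Hh x y ltac:(lra)).
  destruct (Req_dec (h x) (h y)) as [E|E]; [|lra].
  apply (f_equal g) in E. rewrite !Hgh in E. lra.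
Qed.

Lemma eta_preimage L h U : 0 < L -> mono_lipschitz L h -> eta U -> eta (fun x => U (h x)).
Proof.
  intros HL Hh HU x Ux. destruct (HU _ Ux) as (e & He & H).
  exists (e / L). split; [now apply Rdiv_lt_0_compat|].
  intros y Hy. apply H. pose proof (mono_lipschitz_abs L h Hh y x).
  assert (L * Rabs (y - x) < e).
  { apply Rmult_lt_compat_l with (r := L) in Hy; auto.
    now replace (L * (e / L)) with e in Hy by (field; lra). }
  lra.
Qed.

Lemma overhang_scale s e d L : 0 < L -> overhang s (e / L) (d / L) = overhang s e d / L.
Proof. intro. destruct s; simpl; try field; lra. Qed.

Section SpikeImage.

Variables (s : shape) (c c' : Z -> R) (h : R -> R) (L : R).
Hypotheses (HL : 1 <= L) (Hh0 : h 0 = 0) (Hlip : mono_lipschitz L h)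
  (Hstrict : forall x y, x < y -> h x < h y) (Hanchor : maps_anchors c c' h).

Lemma mul_lt_of_lt_div y e : y < e / L -> L * y < e.
Proof.
  intro Hy. apply Rmult_lt_compat_l with (r := L) in Hy; [|lra].
  now replace (L * (e / L)) with e in Hy by (field; lra).
Qed.

Lemma spike_image_ball e x : Rabs x < e / L -> Rabs (h x) < e.
Proof.
  intros Hx%mul_lt_of_lt_div. pose proof (mono_lipschitz_abs L h Hlip x 0) as Hq.
  rewrite Hh0, !Rminus_0_r in Hq. lra.
Qed.

(* The spike at [n] is mapped into the spike at [n]: its anchor goes to the new anchor, and the
   parts before and after the anchor are stretched by a factor at most [L]. *)
Lemma spike_image_tooth e d n x : (1 <= n)%Z -> 0 < e -> 0 < d ->
  IZR n - e / L < x < IZR n + c n + overhang s (e / L) (d / L) ->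
  (s = Punctured -> x <> IZR n + c n) ->
  IZR n - e < h x < IZR n + c' n + overhang s e d /\ (s = Punctured -> h x <> IZR n + c' n).
Proof.
  intros Hn He Hd Hx Hp. destruct (Hanchor n Hn) as [A1 A2].
  assert (Hel : e / L <= e).
  { apply Rmult_le_reg_r with L; [lra|]. replace (e / L * L) with e by (field; lra). nra. }
  rewrite overhang_scale in Hx by lra.
  split; [split|].
  - destruct (Rle_dec (IZR n) x) as [Hle|Hgt].
    + pose proof (Hlip _ _ Hle). lra.
    + pose proof (Hlip x (IZR n) ltac:(lra)). pose proof (mul_lt_of_lt_div (IZR n - x) e). lra.
  - destruct (Rle_dec x (IZR n + c n)) as [Hle|Hgt].
    + destruct (Req_dec x (IZR n + c n)) as [E|E].
      * rewrite E, A2. destruct s; simpl in *; lra.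
      * pose proof (Hstrict x (IZR n + c n) ltac:(lra)).
        assert (0 <= overhang s e d) by (destruct s; simpl; lra). lra.
    + pose proof (Hlip (IZR n + c n) x ltac:(lra)).
      pose proof (mul_lt_of_lt_div (x - (IZR n + c n)) (overhang s e d)). lra.
  - intros Hs E. apply Hp; auto. rewrite <- A2 in E.
    destruct (Rtotal_order x (IZR n + c n)) as [G|[G|G]]; auto; apply Hstrict in G; lra.
Qed.

Lemma spike_nbhd_image e' N' d' : admissible e' N' d' ->
  exists e N d, admissible e N d /\
    forall x, spike_nbhd s c e N d x -> spike_nbhd s c' e' N' d' (h x).
Proof.
  intros ((He & He') & HN & Hd). exists (e' / L), N', (fun n => d' n / L).
  assert (Hdiv : forall y, 0 < y -> 0 < y / L /\ y / L <= y).
  { intros y Hy. split; [apply Rdiv_lt_0_compat; lra|].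
    apply Rmult_le_reg_r with L; [lra|]. replace (y / L * L) with y by (field; lra). nra. }
  split.
  - destruct (Hdiv e' He). split; [lra|]. split; auto. intro n.
    destruct (Hd n). destruct (Hdiv (d' n)); auto. lra.
  - intros x [Hx|(n & Hn & Hx & Hp)]; [left; now apply spike_image_ball|].
    right. exists n. split; auto. apply spike_image_tooth; auto; try lia; apply Hd.
Qed.

Lemma spike_topology_preimage U : spike_topology s c' U -> spike_topology s c (fun x => U (h x)).
Proof.
  intros [HU HU0]. split; [apply (eta_preimage L); auto; lra|].
  rewrite Hh0. intro U0. destruct (HU0 U0) as (e' & N' & d' & Hp & HB).
  destruct (spike_nbhd_image e' N' d' Hp) as (e & N & d & Hp2 & HB2).
  exists e, N, d. split; auto. intros x Hx. auto.
Qed.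

End SpikeImage.

Lemma spike_topology_homeomorphic s c c' h g L : 1 <= L ->
  (forall x, g (h x) = x) -> (forall x, h (g x) = x) -> h 0 = 0 ->
  mono_lipschitz L h -> mono_lipschitz L g -> maps_anchors c c' h -> maps_anchors c' c g ->
  homeomorphic (spike_topology s c) (spike_topology s c').
Proof.
  intros HL Hgh Hhg Hh0 Lh Lg Ah Ag.
  assert (Hg0 : g 0 = 0) by (rewrite <- Hh0 at 1; apply Hgh).
  exists h. split; [|split].
  - intros x y E. now rewrite <- (Hgh x), <- (Hgh y), E.
  - intro y. now exists (g y).
  - intro U. split.
    + apply (spike_topology_preimage s c c' h L); auto.
      exact (mono_lipschitz_strict L h g Hgh Lh).
    + intro HU. apply (spike_topology_preimage s c' c g L) in HU; auto.
      * replace U with (fun y => U (h (g y))); auto.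
        apply functional_extensionality. intro y. now rewrite Hhg.
      * exact (mono_lipschitz_strict L g h Hhg Lg).
Qed.

Definition pl_map (a a' t : R) : R :=
  if Rle_dec t a then t * (a' / a) else 1 - (1 - t) * ((1 - a') / (1 - a)).

Lemma pl_map_0 a a' : 0 < a -> pl_map a a' 0 = 0.
Proof. intro. unfold pl_map. destruct (Rle_dec 0 a); [ring|lra]. Qed.

Lemma pl_map_1 a a' : a < 1 -> pl_map a a' 1 = 1.
Proof. intro. unfold pl_map. destruct (Rle_dec 1 a); [lra|ring]. Qed.

Lemma pl_map_at a a' : 0 < a -> pl_map a a' a = a'.
Proof. intro. unfold pl_map. destruct (Rle_dec a a); [field|]; lra. Qed.

Definition slope_bound (m M : R) : R := 1 / (m * (1 - M)).

Lemma slope_bound_ge1 m M : 0 < m <= M -> M < 1 -> 1 <= slope_bound m M.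
Proof.
  intros Hm HM.
  unfold slope_bound. apply Rmult_le_reg_r with (m * (1 - M)); [nra|].
  replace (1 / (m * (1 - M)) * (m * (1 - M))) with 1 by (field; lra). nra.
Qed.

Section PiecewiseLinear.

Variables (m M a a' : R).
Hypotheses (Hm : 0 < m <= M) (HM : M < 1) (Ha : m <= a <= M) (Ha' : m <= a' <= M).

Lemma pl_slopes :
  0 < a' / a <= slope_bound m M /\ 0 < (1 - a') / (1 - a) <= slope_bound m M /\
  a' / a * a = a' /\ (1 - a') / (1 - a) * (1 - a) = 1 - a'.
Proof.
  unfold slope_bound.
  assert (E1 : a' / a * a = a') by (field; lra).
  assert (E2 : (1 - a') / (1 - a) * (1 - a) = 1 - a') by (field; lra).
  assert (E3 : 1 / (m * (1 - M)) * (m * (1 - M)) = 1) by (field; lra).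
  generalize dependent (a' / a). intros r1 E1.
  generalize dependent ((1 - a') / (1 - a)). intros r2 E2.
  generalize dependent (1 / (m * (1 - M))). intros K E3.
  assert (0 < r1) by nra. assert (0 < r2) by nra. assert (0 < m * (1 - M)) by nra.
  assert (0 < K) by nra.
  split; [split; auto|split; [split; auto|split; auto]].
  - assert (r1 * m <= 1) by nra. assert ((K - r1) * m >= 0) by nra. nra.
  - assert (r2 * (1 - M) <= 1) by nra. assert ((K - r2) * (1 - M) >= 0) by nra. nra.
Qed.

Lemma pl_map_lipschitz t1 t2 : 0 <= t1 <= t2 -> t2 <= 1 ->
  0 <= pl_map a a' t2 - pl_map a a' t1 <= slope_bound m M * (t2 - t1).
Proof.
  intros Ht1 Ht2. destruct pl_slopes as ((R1 & R1') & (R2 & R2') & E1 & E2).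
  unfold pl_map. generalize dependent (a' / a). intros r1 R1 R1' E1.
  generalize dependent ((1 - a') / (1 - a)). intros r2 R2 R2' E2.
  set (K := slope_bound m M) in *.
  destruct (Rle_dec t2 a); destruct (Rle_dec t1 a); try lra.
  - split; nra.
  - assert (Eq : 1 - (1 - t2) * r2 - t1 * r1 = (t2 - a) * r2 + (a - t1) * r1) by nra.
    rewrite Eq. split; nra.
  - split; nra.
Qed.

Lemma pl_map_range t : 0 <= t < 1 -> 0 <= pl_map a a' t < 1.
Proof.
  intro Ht. destruct pl_slopes as ((R1 & R1') & (R2 & R2') & E1 & E2).
  unfold pl_map. generalize dependent (a' / a). intros r1 R1 R1' E1.
  generalize dependent ((1 - a') / (1 - a)). intros r2 R2 R2' E2.
  destruct (Rle_dec t a); split; nra.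
Qed.

Lemma pl_map_inv t : 0 <= t <= 1 -> pl_map a' a (pl_map a a' t) = t.
Proof.
  intro Ht. unfold pl_map at 2. destruct (Rle_dec t a).
  - unfold pl_map. destruct (Rle_dec (t * (a' / a)) a') as [|Hgt]; [field; lra|].
    exfalso. apply Hgt. replace (t * (a' / a)) with (t / a * a') by (field; lra).
    assert (t / a <= 1); [|nra].
    apply Rmult_le_reg_r with a; [lra|]. replace (t / a * a) with t by (field; lra). lra.
  - unfold pl_map. destruct (Rle_dec (1 - (1 - t) * ((1 - a') / (1 - a))) a') as [Hle|];
      [|field; lra].
    exfalso. replace (1 - (1 - t) * ((1 - a') / (1 - a))) with (1 - (1 - t) / (1 - a) * (1 - a'))
      in Hle by (field; lra).
    assert ((1 - t) / (1 - a) < 1) by (apply Rdiv_lt_of_lt_mul; lra). nra.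
Qed.

End PiecewiseLinear.

Definition block_map (c c' : Z -> R) (x : R) : R :=
  if Rlt_dec x 1 then x
  else IZR (Int_part x) + pl_map (c (Int_part x)) (c' (Int_part x)) (x - IZR (Int_part x)).

Lemma block_map_below1 c c' x : 0 < c 1%Z -> x <= 1 -> block_map c c' x = x.
Proof.
  intros Hc1 Hx. unfold block_map. destruct (Rlt_dec x 1); auto.
  replace x with (IZR 1) by lra. rewrite Int_part_IZR, Rminus_diag, pl_map_0; [ring|auto].
Qed.

Section BlockMap.

Variables (m M : R) (c c' : Z -> R).
Hypotheses (Hm : 0 < m <= M) (HM : M < 1) (Hc : bounded_by m M c) (Hc' : bounded_by m M c').

Lemma block_map_block k x : (1 <= k)%Z -> IZR k <= x <= IZR k + 1 ->
  block_map c c' x = IZR k + pl_map (c k) (c' k) (x - IZR k).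
Proof using Hm HM Hc Hc'.
  intros Hk Hx. apply IZR_le in Hk. unfold block_map. destruct (Rlt_dec x 1); [lra|].
  destruct (Req_dec x (IZR k + 1)) as [->|E].
  - rewrite <- plus_IZR, Int_part_IZR, plus_IZR, Rminus_diag.
    replace (IZR k + 1 - IZR k) with 1 by ring.
    pose proof (Hc k). pose proof (Hc (k + 1)%Z). rewrite pl_map_0, pl_map_1; lra.
  - now rewrite (Int_part_eq x k) by lra.
Qed.

Lemma block_map_lipschitz : mono_lipschitz (slope_bound m M) (block_map c c').
Proof using Hm HM Hc Hc'.
  pose proof (slope_bound_ge1 m M Hm HM).
  refine (le_ind_blocks (fun x y =>
    0 <= block_map c c' y - block_map c c' x <= slope_bound m M * (y - x)) _ _ _).
  - intros x y z Hxyz H1 H2. split; nra.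
  - intros x y Hxy. pose proof (Hc 1%Z).
    rewrite !block_map_below1 by lra. split; nra.
  - intros k x y Hk Hxy Hy. rewrite (block_map_block k x), (block_map_block k y); auto; try lra.
    pose proof (pl_map_lipschitz m M (c k) (c' k) Hm HM (Hc k) (Hc' k) (x - IZR k) (y - IZR k))
      as Hpl.
    replace (y - x) with ((y - IZR k) - (x - IZR k)) by ring.
    replace (IZR k + pl_map (c k) (c' k) (y - IZR k) - (IZR k + pl_map (c k) (c' k) (x - IZR k)))
      with (pl_map (c k) (c' k) (y - IZR k) - pl_map (c k) (c' k) (x - IZR k)) by ring.
    apply Hpl; lra.
Qed.

Lemma block_map_anchors : maps_anchors c c' (block_map c c').
Proof using Hm HM Hc Hc'.
  intros n Hn. pose proof (Hc n). pose proof (Hc' n).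
  rewrite !(block_map_block n); auto; try lra.
  rewrite Rminus_diag, Rplus_minus_l, pl_map_0, pl_map_at by lra. split; ring.
Qed.

End BlockMap.

Lemma block_map_inv m M c c' : 0 < m <= M -> M < 1 -> bounded_by m M c -> bounded_by m M c' ->
  forall x, block_map c' c (block_map c c' x) = x.
Proof.
  intros Hm HM Hc Hc' x. destruct (Rlt_dec x 1).
  - pose proof (Hc 1%Z). pose proof (Hc' 1%Z).
    rewrite (block_map_below1 c c' x), (block_map_below1 c' c x); lra.
  - set (k := Int_part x). pose proof (Int_part_bounds x) as Hx. fold k in Hx.
    assert (Hk : (1 <= k)%Z) by (apply Int_part_ge1; lra).
    pose proof (pl_map_range m M (c k) (c' k) Hm HM (Hc k) (Hc' k) (x - IZR k) ltac:(lra)).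
    rewrite (block_map_block m M c c' Hm HM Hc Hc' k x), (block_map_block m M c' c Hm HM Hc' Hc k);
      auto; try lra.
    rewrite Rplus_minus_l, (pl_map_inv m M); auto; [ring|lra].
Qed.

Lemma spike_topology_homeomorphic_bounded m M s c c' : 0 < m <= M -> M < 1 ->
  bounded_by m M c -> bounded_by m M c' -> homeomorphic (spike_topology s c) (spike_topology s c').
Proof.
  intros Hm HM Hc Hc'.
  apply (spike_topology_homeomorphic s c c' (block_map c c') (block_map c' c) (slope_bound m M)).
  - now apply slope_bound_ge1.
  - now apply (block_map_inv m M).
  - now apply (block_map_inv m M).
  - pose proof (Hc 1%Z). apply block_map_below1; lra.
  - now apply block_map_lipschitz.
  - now apply block_map_lipschitz.
  - now apply (block_map_anchors m M).
  - now apply (block_map_anchors m M).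
Qed.

(** * Complete metrics for the [Uniform] topologies *)

Lemma Rmin_lipschitz a b a' b' r : Rabs (a - a') <= r -> Rabs (b - b') <= r ->
  Rabs (Rmin a b - Rmin a' b') <= r.
Proof.
  intros H1%Rabs_le_between H2%Rabs_le_between. apply Rabs_le_between.
  unfold Rmin. destruct (Rle_dec a b); destruct (Rle_dec a' b'); lra.
Qed.

Lemma Rmax0_lipschitz a a' : Rabs (Rmax 0 a - Rmax 0 a') <= Rabs (a - a').
Proof.
  pose proof (Rle_abs (a - a')). pose proof (Rle_abs (-(a - a'))). rewrite Rabs_Ropp in *.
  apply Rabs_le_between. unfold Rmax. destruct (Rle_dec 0 a); destruct (Rle_dec 0 a'); lra.
Qed.

Lemma inv_lt_inv_rev a b : 0 < a -> 0 < b -> 1 / a < 1 / b -> b < a.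
Proof.
  intros Ha Hb H. destruct (Rle_dec a b) as [Hab|Hab]; [|lra].
  exfalso. unfold Rdiv in H. rewrite !Rmult_1_l in H.
  pose proof (Rinv_le_contravar a b Ha Hab). lra.
Qed.

(* [tooth_dist t x] is the length of the shortest path from [x] to 0 that leaves the line
   through an edge of length [1/n] attached to the tooth [n, n + t]. *)
Definition tooth_dist (t x : R) : R :=
  if Rlt_dec x 1 then 2 - x else
  Rmin (1 / IZR (Int_part x) + Rmax 0 (x - IZR (Int_part x) - t))
       (1 / (IZR (Int_part x) + 1) + (1 - (x - IZR (Int_part x)))).

Definition dist0 (t x : R) : R := Rmin (Rabs x) (tooth_dist t x).

(* Shortest paths either stay on the line or pass through 0. *)
Definition uniform_metric (t : R) (x y : R) : R := Rmin (Rabs (x - y)) (dist0 t x + dist0 t y).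

Section UniformMetric.

Variable t : R.
Hypothesis Ht : 0 < t <= 1/16.

Lemma tooth_dist_below1 x : x <= 1 -> tooth_dist t x = 2 - x.
Proof.
  intro Hx. unfold tooth_dist. destruct (Rlt_dec x 1); auto.
  replace x with (IZR 1) by lra. rewrite Int_part_IZR, Rminus_diag.
  unfold Rmax, Rmin. destruct (Rle_dec 0 (0 - t)); [lra|].
  destruct (Rle_dec (1 / 1 + 0) (1 / (1 + 1) + (1 - 0))); lra.
Qed.

Lemma tooth_dist_block k x : (1 <= k)%Z -> IZR k <= x <= IZR k + 1 ->
  tooth_dist t x = Rmin (1 / IZR k + Rmax 0 (x - IZR k - t)) (1 / (IZR k + 1) + (1 - (x - IZR k))).
Proof.
  intros Hk Hx. apply IZR_le in Hk.
  unfold tooth_dist. destruct (Rlt_dec x 1); [lra|].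
  destruct (Req_dec x (IZR k + 1)) as [->|E]; [|now rewrite (Int_part_eq x k) by lra].
  rewrite <- plus_IZR, Int_part_IZR, plus_IZR, Rminus_diag.
  replace (IZR k + 1 - IZR k) with 1 by ring.
  assert (1 / (IZR k + 1) < 1 / IZR k).
  { apply Rmult_lt_reg_r with (IZR k * (IZR k + 1)); [nra|].
    replace (1 / (IZR k + 1) * (IZR k * (IZR k + 1))) with (IZR k) by (field; lra).
    replace (1 / IZR k * (IZR k * (IZR k + 1))) with (IZR k + 1) by (field; lra). lra. }
  assert (0 < 1 / (IZR k + 1 + 1)) by (apply Rdiv_lt_0_compat; lra).
  assert (1 / (IZR k + 1) < 1) by (apply Rdiv_lt_of_lt_mul; lra).
  unfold Rmax. destruct (Rle_dec 0 (0 - t)); try lra. destruct (Rle_dec 0 (1 - t)); try lra.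
  unfold Rmin. destruct (Rle_dec (1 / (IZR k + 1) + 0) (1 / (IZR k + 1 + 1) + (1 - 0)));
    destruct (Rle_dec (1 / IZR k + (1 - t)) (1 / (IZR k + 1) + (1 - 1))); lra.
Qed.

Lemma tooth_dist_lipschitz x y : Rabs (tooth_dist t x - tooth_dist t y) <= Rabs (x - y).
Proof.
  assert (H : forall x y, x <= y -> Rabs (tooth_dist t y - tooth_dist t x) <= y - x).
  { refine (le_ind_blocks (fun x y => Rabs (tooth_dist t y - tooth_dist t x) <= y - x) _ _ _).
    - intros x' y' z Hxyz H1 H2. pose proof (Rabs_sub_triang (tooth_dist t z) (tooth_dist t y')
        (tooth_dist t x')). lra.
    - intros x' y' Hxy. rewrite !tooth_dist_below1 by lra.
      replace (2 - y' - (2 - x')) with (-(y' - x')) by ring. rewrite Rabs_Ropp, Rabs_pos_eq; lra.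
    - intros k x' y' Hk Hxy Hy.
      rewrite (tooth_dist_block k x'), (tooth_dist_block k y'); auto; try lra.
      apply Rmin_lipschitz.
      + replace (1 / IZR k + Rmax 0 (y' - IZR k - t) - (1 / IZR k + Rmax 0 (x' - IZR k - t)))
          with (Rmax 0 (y' - IZR k - t) - Rmax 0 (x' - IZR k - t)) by ring.
        eapply Rle_trans; [apply Rmax0_lipschitz|]. rewrite Rabs_pos_eq; lra.
      + replace (1 / (IZR k + 1) + (1 - (y' - IZR k)) - (1 / (IZR k + 1) + (1 - (x' - IZR k))))
          with (- (y' - x')) by ring. rewrite Rabs_Ropp, Rabs_pos_eq; lra. }
  destruct (Rle_dec x y) as [Hxy|Hxy].
  - rewrite Rabs_minus_sym, (Rabs_left1 (x - y)) by lra. specialize (H x y Hxy). lra.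
  - rewrite (Rabs_pos_eq (x - y)) by lra. apply H. lra.
Qed.

Lemma tooth_dist_pos x : 0 < tooth_dist t x.
Proof.
  destruct (Rle_dec x 1); [rewrite tooth_dist_below1; lra|].
  assert (Hk : (1 <= Int_part x)%Z) by (apply Int_part_ge1; lra).
  pose proof (Int_part_bounds x). pose proof (IZR_le _ _ Hk).
  rewrite (tooth_dist_block (Int_part x) x); auto; try lra.
  assert (0 < 1 / IZR (Int_part x)) by (apply Rdiv_lt_0_compat; lra).
  assert (0 < 1 / (IZR (Int_part x) + 1)) by (apply Rdiv_lt_0_compat; lra).
  pose proof (Rmax_l 0 (x - IZR (Int_part x) - t)). apply Rmin_pos; lra.
Qed.

Lemma dist0_lipschitz x y : Rabs (dist0 t x - dist0 t y) <= Rabs (x - y).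
Proof. apply Rmin_lipschitz; [apply Rabs_triang_inv2|apply tooth_dist_lipschitz]. Qed.

Lemma dist0_le_abs x : dist0 t x <= Rabs x.
Proof. apply Rmin_l. Qed.

Lemma dist0_nonneg x : 0 <= dist0 t x.
Proof.
  pose proof (tooth_dist_pos x). pose proof (Rabs_pos x).
  unfold dist0, Rmin. destruct (Rle_dec (Rabs x) (tooth_dist t x)); lra.
Qed.

Lemma dist0_eq0 x : dist0 t x = 0 <-> x = 0.
Proof.
  split.
  - intro H. pose proof (tooth_dist_pos x). unfold dist0, Rmin in H.
    destruct (Rle_dec (Rabs x) (tooth_dist t x)); [|lra].
    destruct (Req_dec x 0) as [|Hx]; auto. pose proof (Rabs_pos_lt x Hx). lra.
  - intros ->. pose proof (dist0_nonneg 0). pose proof (dist0_le_abs 0). rewrite Rabs_R0 in *. lra.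
Qed.

Lemma uniform_metric_le x y : uniform_metric t x y <= Rabs (x - y).
Proof. apply Rmin_l. Qed.

Lemma uniform_metric_0l y : uniform_metric t 0 y = dist0 t y.
Proof.
  unfold uniform_metric. rewrite (proj2 (dist0_eq0 0) eq_refl), Rminus_0_l, Rabs_Ropp, Rplus_0_l.
  pose proof (dist0_le_abs y). unfold Rmin. destruct (Rle_dec (Rabs y) (dist0 t y)); lra.
Qed.

Lemma uniform_metric_is_metric : is_metric (uniform_metric t).
Proof.
  pose proof dist0_nonneg as Hn. split; [|split; [|split]].
  - intros x y. pose proof (Hn x). pose proof (Hn y). pose proof (Rabs_pos (x - y)).
    unfold uniform_metric, Rmin. destruct (Rle_dec (Rabs (x - y)) (dist0 t x + dist0 t y)); lra.
  - intros x y. split.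
    + intro H. pose proof (Hn x). pose proof (Hn y). unfold uniform_metric, Rmin in H.
      destruct (Rle_dec (Rabs (x - y)) (dist0 t x + dist0 t y)).
      * destruct (Req_dec x y); auto. assert (0 < Rabs (x - y)) by (apply Rabs_pos_lt; lra). lra.
      * assert (Hx : dist0 t x = 0) by lra. assert (Hy : dist0 t y = 0) by lra.
        rewrite dist0_eq0 in Hx, Hy. congruence.
    + intros ->. unfold uniform_metric. rewrite Rminus_diag, Rabs_R0. pose proof (Hn y).
      unfold Rmin. destruct (Rle_dec 0 (dist0 t y + dist0 t y)); lra.
  - intros x y. unfold uniform_metric. now rewrite Rabs_minus_sym, (Rplus_comm (dist0 t x)).
  - intros x y z. unfold uniform_metric. pose proof (Hn y).
    pose proof (Rabs_sub_triang x y z).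
    pose proof (dist0_lipschitz x y) as Hxy%Rabs_le_between.
    pose proof (dist0_lipschitz z y) as Hzy%Rabs_le_between.
    rewrite (Rabs_minus_sym z y) in Hzy.
    unfold Rmin.
    destruct (Rle_dec (Rabs (x - z)) (dist0 t x + dist0 t z));
    destruct (Rle_dec (Rabs (x - y)) (dist0 t x + dist0 t y));
    destruct (Rle_dec (Rabs (y - z)) (dist0 t y + dist0 t z)); lra.
Qed.

Lemma dist0_small_on_spikes r : 0 < r ->
  exists e N, admissible e N (fun _ => 1/16) /\
    forall x, spike_nbhd Uniform (fun _ => t) e N (fun _ => 1/16) x -> dist0 t x < r.
Proof.
  intro Hr.
  set (e := Rmin (1/8) (r/2)). destruct (eventually_Z_gt (2 / r)) as [N0 HN0].
  set (N := Z.max 2 N0).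
  assert (He : 0 < e) by (apply Rmin_pos; lra).
  assert (He1 : e <= 1/8) by apply Rmin_l. assert (He2 : e <= r/2) by apply Rmin_r.
  exists e, N. split; [apply admissible_const; lra || (unfold N; lia)|].
  intros x [Hx|(n & Hn & Hx & _)]; [pose proof (dist0_le_abs x); lra|].
  simpl in Hx.
  assert (Hn2 : 2 <= IZR n) by (apply IZR_le; unfold N in Hn; lia).
  assert (HnN : 2 / r < IZR n) by (apply HN0; unfold N in Hn; lia).
  assert (Hinv : 1 / IZR n < r / 2).
  { apply Rdiv_lt_of_lt_mul; [lra|]. assert (2 / r * r = 2) by (field; lra). nra. }
  assert (tooth_dist t x < r); [|eapply Rle_lt_trans; [apply Rmin_r|auto]].
  destruct (Rle_dec (IZR n) x).
  - rewrite (tooth_dist_block n x); try lia; try lra.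
    eapply Rle_lt_trans; [apply Rmin_l|]. unfold Rmax. destruct (Rle_dec 0 (x - IZR n - t)); lra.
  - rewrite (tooth_dist_block (n - 1) x); try lia; rewrite ?minus_IZR; try lra.
    eapply Rle_lt_trans; [apply Rmin_r|]. replace (IZR n - 1 + 1) with (IZR n) by ring. lra.
Qed.

Lemma spike_of_small_tooth_dist e N x : 0 < e -> (1 <= N)%Z -> 1 <= x ->
  tooth_dist t x < Rmin e (1 / (IZR N + 1)) ->
  exists n, (N <= n)%Z /\ IZR n - e < x < IZR n + t + e.
Proof.
  intros He HN Hx1 Hx. apply IZR_le in HN.
  pose proof (Rmin_l e (1 / (IZR N + 1))). pose proof (Rmin_r e (1 / (IZR N + 1))).
  set (m := Int_part x). assert (Hm : (1 <= m)%Z) by (apply Int_part_ge1; lra).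
  pose proof (Int_part_bounds x) as Hmx. fold m in Hmx. pose proof (IZR_le _ _ Hm).
  rewrite (tooth_dist_block m x) in Hx by (auto; lra).
  unfold Rmin at 1 in Hx.
  destruct (Rle_dec (1 / IZR m + Rmax 0 (x - IZR m - t)) (1 / (IZR m + 1) + (1 - (x - IZR m)))).
  - pose proof (Rmax_l 0 (x - IZR m - t)). pose proof (Rmax_r 0 (x - IZR m - t)).
    assert (IZR N + 1 < IZR m) by (apply inv_lt_inv_rev; lra).
    exists m. split; [apply le_IZR; lra|].
    assert (0 < 1 / IZR m) by (apply Rdiv_lt_0_compat; lra). lra.
  - assert (0 < 1 / (IZR m + 1)) by (apply Rdiv_lt_0_compat; lra).
    assert (IZR N + 1 < IZR m + 1) by (apply inv_lt_inv_rev; lra).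
    exists (m + 1)%Z. rewrite plus_IZR. split; [apply le_IZR; rewrite plus_IZR; lra|]. lra.
Qed.

Lemma spike_nbhd_contains_ball e N d : admissible e N d ->
  exists r, 0 < r /\ forall x, dist0 t x < r -> spike_nbhd Uniform (fun _ => t) e N d x.
Proof.
  intros ((He & He') & HN & Hd). pose proof (IZR_le _ _ HN).
  assert (0 < 1 / (IZR N + 1)) by (apply Rdiv_lt_0_compat; lra).
  assert (1 / (IZR N + 1) <= 1/2).
  { apply Rmult_le_reg_r with (2 * (IZR N + 1)); [lra|].
    replace (1 / (IZR N + 1) * (2 * (IZR N + 1))) with 2 by (field; lra). lra. }
  pose proof (Rmin_l e (1 / (IZR N + 1))). pose proof (Rmin_r e (1 / (IZR N + 1))).
  exists (Rmin e (1 / (IZR N + 1))). split; [apply Rmin_pos; lra|].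
  intros x Hx. unfold dist0, Rmin at 1 in Hx.
  destruct (Rle_dec (Rabs x) (tooth_dist t x)) as [Hle|Hgt]; [left; lra|].
  destruct (Rle_dec x 1) as [Hx1|Hx1]; [rewrite tooth_dist_below1 in Hx; lra|].
  destruct (spike_of_small_tooth_dist e N x) as (n & Hn & Hnx); auto; try lra.
  right. exists n. simpl. split; auto. split; [lra|easy].
Qed.

(* A Cauchy sequence either approaches 0 through the teeth, or is eventually Euclidean-Cauchy. *)
Lemma uniform_metric_complete : metric_complete (uniform_metric t).
Proof.
  intros u Hu.
  destruct (classic (forall r, 0 < r -> forall N, exists n, (N <= n)%nat /\ dist0 t (u n) < r))
    as [Hnear|Hfar].
  - exists 0. intros r Hr. destruct (Hu (r/2) ltac:(lra)) as [N HN].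
    destruct (Hnear (r/2) ltac:(lra) N) as (n & Hn & Hd). exists N. intros k Hk.
    destruct uniform_metric_is_metric as (_ & _ & Hsym & Htri).
    pose proof (Htri (u k) (u n) 0) as Hk0. rewrite (Hsym (u n) 0), uniform_metric_0l in Hk0.
    specialize (HN k n Hk Hn). lra.
  - assert (Hbound : exists r N0, 0 < r /\ forall n, (N0 <= n)%nat -> r <= dist0 t (u n)).
    { apply NNPP. intro H. apply Hfar. intros r Hr N. apply NNPP. intro H'. apply H.
      exists r, N. split; auto. intros n Hn. apply Rnot_lt_le. intro H''. apply H'. eauto. }
    destruct Hbound as (r & N0 & Hr & HN0).
    assert (Hcauchy : Cauchy_crit u).
    { intros e He. destruct (Hu (Rmin e r) ltac:(apply Rmin_pos; lra)) as [N HN].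
      exists (Nat.max N N0). intros n m Hn Hm. unfold R_dist.
      specialize (HN n m ltac:(lia) ltac:(lia)).
      pose proof (HN0 n ltac:(lia)). pose proof (HN0 m ltac:(lia)).
      pose proof (Rmin_l e r). pose proof (Rmin_r e r).
      unfold uniform_metric, Rmin at 1 in HN.
      destruct (Rle_dec (Rabs (u n - u m)) (dist0 t (u n) + dist0 t (u m))); lra. }
    destruct (R_complete u Hcauchy) as [l Hl]. exists l. intros e He.
    destruct (Hl e He) as [N HN]. exists N. intros n Hn. specialize (HN n Hn). unfold R_dist in HN.
    pose proof (uniform_metric_le (u n) l). lra.
Qed.

Lemma uniform_metric_topology U : uniform_topology t U <-> metric_topology (uniform_metric t) U.
Proof.
  split.
  - intros [HU HU0] x Ux. destruct (Req_dec x 0) as [->|Hx].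
    + destruct (HU0 Ux) as (e & N & d & Hp & HB).
      destruct (spike_nbhd_contains_ball e N d Hp) as (r & Hr & Hin).
      exists r. split; auto. intros y Hy. rewrite uniform_metric_0l in Hy. apply HB, Hin, Hy.
    + destruct (HU x Ux) as (r & Hr & Hb).
      assert (Hd : 0 < dist0 t x).
      { pose proof (dist0_nonneg x). destruct (Req_dec (dist0 t x) 0) as [E|E]; [|lra].
        rewrite dist0_eq0 in E. lra. }
      exists (Rmin r (dist0 t x)). split; [now apply Rmin_pos|].
      intros y Hy. apply Hb. pose proof (Rmin_l r (dist0 t x)). pose proof (Rmin_r r (dist0 t x)).
      pose proof (dist0_nonneg y). unfold uniform_metric, Rmin at 1 in Hy.
      destruct (Rle_dec (Rabs (x - y)) (dist0 t x + dist0 t y)); [rewrite Rabs_minus_sym|]; lra.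
  - intros HU. split.
    + intros x Ux. destruct (HU x Ux) as (e & He & Hb). exists e. split; auto.
      intros y Hy. apply Hb. pose proof (uniform_metric_le x y) as Hle.
      rewrite Rabs_minus_sym in Hle. lra.
    + intro U0. destruct (HU 0 U0) as (r & Hr & Hb).
      destruct (dist0_small_on_spikes r Hr) as (e & N & Hp & Hin).
      exists e, N, (fun _ => 1/16). split; auto.
      intros x Hx. apply Hb. rewrite uniform_metric_0l. auto.
Qed.

End UniformMetric.

Lemma uniform_topology_completely_metrizable t : 0 < t <= 1/16 ->
  completely_metrizable (uniform_topology t).
Proof.
  intro Ht. exists (uniform_metric t). split; [|split].
  - now apply uniform_metric_is_metric.
  - now apply uniform_metric_complete.
  - intro U. now apply uniform_metric_topology.
Qed.

(** * The four chains *)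

Lemma fan_family_in_L0 s t : fan_family s t -> in_L0 t.
Proof. intros [x ->]. apply spike_topology_in_L0. Qed.

Lemma fan_family_homeomorphic s t t' : fan_family s t -> fan_family s t' -> homeomorphic t t'.
Proof.
  intros [x ->] [y ->]. apply (spike_topology_homeomorphic_bounded (1/4) (3/4)); try lra;
    apply fan_anchor_bounded.
Qed.

Lemma fan_family_stop t : fan_family Stop t -> second_countable t /\ ~ regular t.
Proof.
  intros [x ->]. split; [apply stop_second_countable|].
  apply spike_topology_not_regular; [now left|apply fan_anchor_bounded].
Qed.

Lemma fan_family_punctured t : fan_family Punctured t -> ~ regular t /\ ~ first_countable t.
Proof.
  intros [x ->]. pose proof (fan_anchor_bounded Punctured x).
  split; [apply spike_topology_not_regular|apply spike_topology_not_first_countable]; auto.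
Qed.

Lemma fan_family_overhang t : fan_family Overhang t -> completely_normal t /\ ~ first_countable t.
Proof.
  intros [x ->]. pose proof (fan_anchor_bounded Overhang x).
  split; [now apply overhang_completely_normal|].
  apply spike_topology_not_first_countable; auto.
Qed.

Definition uniform_param (x : R) : R := 1/32 + anchor 0 x 0 / 8.

Definition uniform_family : topo -> Prop :=
  fun T => exists x, T = uniform_topology (uniform_param x).

Lemma uniform_param_bounds x : 0 < uniform_param x < 1/16.
Proof.
  unfold uniform_param, anchor. rewrite Rabs_R0, Rplus_0_r.
  destruct (perturbation_bounds x 1 ltac:(lra)) as [_ Hb%Rabs_lt_between]. lra.
Qed.

Lemma uniform_param_lt x y : x < y -> uniform_param x < uniform_param y.
Proof. intro Hxy. unfold uniform_param. pose proof (anchor_lt_of_lt_d 0 x y 0 Hxy). lra. Qed.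

Lemma uniform_family_in_L0 t : uniform_family t -> in_L0 t.
Proof. intros [x ->]. apply spike_topology_in_L0. Qed.

Lemma uniform_family_chain : chain uniform_family.
Proof.
  intros X Y [x ->] [y ->]. destruct (Rle_dec (uniform_param x) (uniform_param y)).
  - right. now apply uniform_topology_antitone.
  - left. apply uniform_topology_antitone. lra.
Qed.

Lemma uniform_family_card : card_c uniform_family.
Proof.
  exists (fun x => uniform_topology (uniform_param x)). split; [intro r; now exists r|]. split.
  - intros x y E. pose proof (uniform_param_bounds x). pose proof (uniform_param_bounds y).
    destruct (Rtotal_order x y) as [Hxy|[Hxy|Hxy]]; auto; exfalso; apply uniform_param_lt in Hxy.
    + revert E. apply uniform_topology_neq; lra.
    + symmetry in E. revert E. apply uniform_topology_neq; lra.
  - intros t [x ->]. now exists x.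
Qed.

Lemma uniform_family_homeomorphic t t' : uniform_family t -> uniform_family t' -> homeomorphic t t'.
Proof.
  intros [x ->] [y ->]. pose proof (uniform_param_bounds x). pose proof (uniform_param_bounds y).
  pose proof (Rmin_l (uniform_param x) (uniform_param y)).
  pose proof (Rmin_r (uniform_param x) (uniform_param y)).
  pose proof (Rmin_pos (uniform_param x) (uniform_param y) ltac:(lra) ltac:(lra)).
  apply (spike_topology_homeomorphic_bounded (Rmin (uniform_param x) (uniform_param y)) (1/16));
    [split| |intro n; split..]; lra.
Qed.

Lemma uniform_family_completely_metrizable t : uniform_family t -> completely_metrizable t.
Proof.
  intros [x ->]. apply uniform_topology_completely_metrizable.
  pose proof (uniform_param_bounds x). lra.
Qed.

Lemma fans_sub_uniform_family t t' : fans t -> uniform_family t' -> tsub t t'.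
Proof.
  intros (s & x & Hs & ->)%fans_inv [y ->]. apply spike_topology_sub_uniform; auto.
  - intro m. apply fan_anchor_bounded.
  - pose proof (uniform_param_bounds y). lra.
Qed.

Theorem theorem7 :
  exists K0 K1 K2 K3 : topo -> Prop,
    (forall t, K0 t -> in_L0 t) /\ (forall t, K1 t -> in_L0 t) /\
    (forall t, K2 t -> in_L0 t) /\ (forall t, K3 t -> in_L0 t) /\
    chain K0 /\ chain K1 /\ chain K2 /\ chain K3 /\
    card_c K0 /\ card_c K1 /\ card_c K2 /\ card_c K3 /\
    (forall t s, K0 t -> K0 s -> homeomorphic t s) /\
    (forall t s, K1 t -> K1 s -> homeomorphic t s) /\
    (forall t s, K2 t -> K2 s -> homeomorphic t s) /\
    (forall t s, K3 t -> K3 s -> homeomorphic t s) /\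
    (* (i) *)
    (forall t, K0 t -> second_countable t /\ ~ regular t) /\
    (* (ii) *)
    (forall t, K1 t -> ~ regular t /\ ~ first_countable t) /\
    (* (iii) *)
    (forall t, K2 t -> completely_normal t /\ ~ first_countable t) /\
    (* (iv) *)
    (forall t, K3 t -> completely_metrizable t) /\
    (* (v) *)
    chain (union3 K0 K1 K2) /\
    dense_in K0 (union3 K0 K1 K2) /\ dense_in K1 (union3 K0 K1 K2) /\
    dense_in K2 (union3 K0 K1 K2) /\
    (* (vi) *)
    (forall t s, union3 K0 K1 K2 t -> K3 s -> tsub t s).
Proof.
  exists (fan_family Stop), (fan_family Punctured), (fan_family Overhang), uniform_family.
  assert (HS : Stop <> Uniform) by discriminate.
  assert (HP : Punctured <> Uniform) by discriminate.
  assert (HO : Overhang <> Uniform) by discriminate.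
  repeat match goal with |- _ /\ _ => split end.
  - apply fan_family_in_L0.
  - apply fan_family_in_L0.
  - apply fan_family_in_L0.
  - apply uniform_family_in_L0.
  - now apply fan_family_chain.
  - now apply fan_family_chain.
  - now apply fan_family_chain.
  - apply uniform_family_chain.
  - now apply fan_family_card.
  - now apply fan_family_card.
  - now apply fan_family_card.
  - apply uniform_family_card.
  - apply fan_family_homeomorphic.
  - apply fan_family_homeomorphic.
  - apply fan_family_homeomorphic.
  - apply uniform_family_homeomorphic.
  - apply fan_family_stop.
  - apply fan_family_punctured.
  - apply fan_family_overhang.
  - apply uniform_family_completely_metrizable.
  - apply fans_chain.
  - now apply fan_family_dense.
  - now apply fan_family_dense.
  - now apply fan_family_dense.
  - apply fans_sub_uniform_family.
Qed.
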